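(* Let $x_1,\ldots,x_n,y_1,\ldots,y_p$ be self-adjoint elements of a unital C$^*$-algebra $\mathcal A$ such that $y_1,\ldots,y_p$ belong to the C$^*$-subalgebra of $\mathcal A$ generated by $x_1,\ldots,x_n$. Then for every $\omega>0$, $$\mathfrak K_{top}^{(2)}(x_1,\ldots,x_n;4\omega)\le\mathfrak K_{top}^{(2)}(x_1,\ldots,x_n:y_1,\ldots,y_p;2\omega)\le\mathfrak K_{top}^{(2)}(x_1,\ldots,x_n;\omega).$$
   Context: Microstates. Let $\mathcal A$ be a unital C$^*$-algebra and $x_1,\dots,x_n,y_1,\dots,y_m$ self-adjoint elements of $\mathcal A$. Let $\{P_r\}_{r\ge1}$ enumerate all noncommutative polynomials in the indeterminates $X_1,\dots,X_n,Y_1,\dots,Y_m$ whose coefficients have rational real and imaginary parts (constants allowed). $\mathcal M_k^{s.a.}(\mathbb C)$ is the set of self-adjoint $k\times k$ complex matrices and $\tau_k=\frac1k\mathrm{Tr}$. For $R,\epsilon>0$ and $r,k\in\mathbb N$, $\Gamma_R^{(top)}(x_1,\dots,x_n:y_1,\dots,y_m;k,\epsilon,P_1,\dots,P_r)$ is the set of $(A_1,\dots,A_n)\in\mathcal M_k^{s.a.}(\mathbb C)^n$ for which there exist $B_1,\dots,B_m\in\mathcal M_k^{s.a.}(\mathbb C)$ with $\max_{i,j}\{\|A_i\|,\|B_j\|\}\le R$ and $\big|\|P_j(A_1,\dots,A_n,B_1,\dots,B_m)\|-\|P_j(x_1,\dots,x_n,y_1,\dots,y_m)\|\big|\le\epsilon$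 for $1\le j\le r$. When $m=0$ it is written $\Gamma_R^{(top)}(x_1,\dots,x_n;k,\epsilon,P_1,\dots,P_r)$. Covering numbers. On $\mathcal M_k(\mathbb C)^n$ put $\|(A_i)\|_2=(\sum_i\tau_k(A_i^*A_i))^{1/2}$. The $\omega$-orbit ball centred at $(B_i)$ is the set of $(A_i)$ such that some unitary $W\in\mathcal M_k(\mathbb C)$ satisfies $\|(A_i)-(WB_iW^* )\|_2<\omega$; for $\Sigma\subseteq\mathcal M_k(\mathbb C)^n$, $o_2(\Sigma,\omega)$ is the minimal number of $\omega$-orbit balls centred at points of $\Sigma$ covering $\Sigma$. Convention $\log 0=-\infty$. Topological orbit dimension: $\mathfrak K^{(2)}_{top}(x:y;\omega)=\sup_{R>0}\inf_{\epsilon>0,r\in\mathbb N}\limsup_{k\to\infty}\frac{\log o_2(\Gamma_R^{(top)}(x:y;k,\epsilon,P_1,\dots,P_r),\omega)}{k^2}$; when $m=0$ the ''$:y$'' part is omitted. *)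

From Stdlib Require Import Reals QArith Qreals ClassicalEpsilon.
From mathcomp Require Import ssreflect ssrfun ssrbool eqtype ssrnat seq fintype bigop.

Set Implicit Arguments.
Unset Strict Implicit.
Unset Printing Implicit Defensive.

Local Open Scope R_scope.

Record C := mkC { Cre : R; Cim : R }.
Definition C0 : C := mkC 0 0.
Definition C1 : C := mkC 1 0.
Definition Cadd (z w : C) : C := mkC (Cre z + Cre w) (Cim z + Cim w).
Definition Copp (z : C) : C := mkC (- Cre z) (- Cim z).
Definition Cmul (z w : C) : C :=
  mkC (Cre z * Cre w - Cim z * Cim w) (Cre z * Cim w + Cim z * Cre w).
Definition Cconj (z : C) : C := mkC (Cre z) (- Cim z).
Definition Cabs (z : C) : R := sqrt (Rsqr (Cre z) + Rsqr (Cim z)).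
Definition CofR (r : R) : C := mkC r 0.
Definition CofQ (a b : Q) : C := mkC (Q2R a) (Q2R b).

Record CstarAlg := {
  ca_car :> Type;
  ca_zero : ca_car;
  ca_one : ca_car;
  ca_add : ca_car -> ca_car -> ca_car;
  ca_opp : ca_car -> ca_car;
  ca_mul : ca_car -> ca_car -> ca_car;
  ca_smul : C -> ca_car -> ca_car;
  ca_star : ca_car -> ca_car;
  ca_norm : ca_car -> R;
  ca_addA : forall x y z, ca_add x (ca_add y z) = ca_add (ca_add x y) z;
  ca_addC : forall x y, ca_add x y = ca_add y x;
  ca_add0 : forall x, ca_add ca_zero x = x;
  ca_addN : forall x, ca_add x (ca_opp x) = ca_zero;
  ca_smul1 : forall x, ca_smul C1 x = x;
  ca_smulA : forall a b x, ca_smul a (ca_smul b x) = ca_smul (Cmul a b) x;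
  ca_smulDr : forall a x y, ca_smul a (ca_add x y) = ca_add (ca_smul a x) (ca_smul a y);
  ca_smulDl : forall a b x, ca_smul (Cadd a b) x = ca_add (ca_smul a x) (ca_smul b x);
  ca_mulA : forall x y z, ca_mul x (ca_mul y z) = ca_mul (ca_mul x y) z;
  ca_mul1l : forall x, ca_mul ca_one x = x;
  ca_mul1r : forall x, ca_mul x ca_one = x;
  ca_mulDl : forall x y z, ca_mul (ca_add x y) z = ca_add (ca_mul x z) (ca_mul y z);
  ca_mulDr : forall x y z, ca_mul x (ca_add y z) = ca_add (ca_mul x y) (ca_mul x z);
  ca_smul_mull : forall a x y, ca_mul (ca_smul a x) y = ca_smul a (ca_mul x y);
  ca_smul_mulr : forall a x y, ca_mul x (ca_smul a y) = ca_smul a (ca_mul x y);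
  ca_starD : forall x y, ca_star (ca_add x y) = ca_add (ca_star x) (ca_star y);
  ca_starZ : forall a x, ca_star (ca_smul a x) = ca_smul (Cconj a) (ca_star x);
  ca_starM : forall x y, ca_star (ca_mul x y) = ca_mul (ca_star y) (ca_star x);
  ca_starK : forall x, ca_star (ca_star x) = x;
  ca_norm_eq0 : forall x, ca_norm x = 0 -> x = ca_zero;
  ca_normD : forall x y, ca_norm (ca_add x y) <= ca_norm x + ca_norm y;
  ca_normZ : forall a x, ca_norm (ca_smul a x) = Cabs a * ca_norm x;
  ca_normM : forall x y, ca_norm (ca_mul x y) <= ca_norm x * ca_norm y;
  ca_cstar : forall x, ca_norm (ca_mul (ca_star x) x) = ca_norm x * ca_norm x;
  ca_complete : forall u : nat -> ca_car,
    (forall e, 0 < e -> exists N, forall p q, (N <= p)%N -> (N <= q)%N ->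
        ca_norm (ca_add (u p) (ca_opp (u q))) < e) ->
    exists l, forall e, 0 < e -> exists N, forall p, (N <= p)%N ->
        ca_norm (ca_add (u p) (ca_opp l)) < e
}.

Arguments ca_zero {c}. Arguments ca_one {c}. Arguments ca_add {c}.
Arguments ca_opp {c}. Arguments ca_mul {c}. Arguments ca_smul {c}.
Arguments ca_star {c}. Arguments ca_norm {c}.

Definition unital_cstar_subalg (A : CstarAlg) (S : A -> Prop) : Prop :=
  S ca_one /\
  (forall u v, S u -> S v -> S (ca_add u v)) /\
  (forall a u, S u -> S (ca_smul a u)) /\
  (forall u v, S u -> S v -> S (ca_mul u v)) /\
  (forall u, S u -> S (ca_star u)) /\
  (forall z, (forall e, 0 < e -> exists w, S w /\ ca_norm (ca_add z (ca_opp w)) < e) -> S z).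

Definition in_Cstar_gen (A : CstarAlg) (I : Type) (x : I -> A) (z : A) : Prop :=
  forall S : A -> Prop, unital_cstar_subalg S -> (forall i, S (x i)) -> S z.

Definition Rlub (E : R -> Prop) : R := epsilon (inhabits 0) (is_lub E).

Inductive ER := ERfin (r : R) | ERpinf | ERminf.

Definition ERle (a b : ER) : Prop :=
  match a, b with
  | ERminf, _ => True
  | _, ERpinf => True
  | ERfin r, ERfin s => r <= s
  | _, _ => False
  end.

Definition Esup (E : ER -> Prop) : ER :=
  epsilon (inhabits ERminf)
    (fun s => (forall z, E z -> ERle z s) /\
              (forall s', (forall z, E z -> ERle z s') -> ERle s s')).

Definition Einf (E : ER -> Prop) : ER :=
  epsilon (inhabits ERminf)
    (fun s => (forall z, E z -> ERle s z) /\
              (forall s', (forall z, E z -> ERle s' z) -> ERle s' s)).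

Definition Elimsup (u : nat -> ER) : ER :=
  Einf (fun z => exists N, z = Esup (fun w => exists k, (N <= k)%N /\ w = u k)).

Definition Mat (k : nat) := 'I_k -> 'I_k -> C.
Definition Vec (k : nat) := 'I_k -> C.

Definition Csum (k : nat) (F : 'I_k -> C) : C := \big[Cadd/C0]_(i < k) F i.
Definition Rsum (k : nat) (F : 'I_k -> R) : R := \big[Rplus/0]_(i < k) F i.

Definition madd k (A B : Mat k) : Mat k := fun i j => Cadd (A i j) (B i j).
Definition msub k (A B : Mat k) : Mat k := fun i j => Cadd (A i j) (Copp (B i j)).
Definition msmul k (a : C) (A : Mat k) : Mat k := fun i j => Cmul a (A i j).
Definition mmul k (A B : Mat k) : Mat k := fun i j => Csum (fun l => Cmul (A i l) (B l j)).
Definition madj k (A : Mat k) : Mat k := fun i j => Cconj (A j i).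
Definition mI k : Mat k := fun i j => if i == j then C1 else C0.

Definition mapply k (A : Mat k) (v : Vec k) : Vec k := fun i => Csum (fun j => Cmul (A i j) (v j)).
Definition vnorm k (v : Vec k) : R := sqrt (Rsum (fun i => Rsqr (Cabs (v i)))).

Definition mopnorm k (A : Mat k) : R :=
  Rlub (fun r => r = 0 \/ exists v : Vec k, vnorm v = 1 /\ r = vnorm (mapply A v)).

Definition msa k (A : Mat k) : Prop := forall i j, A i j = Cconj (A j i).

Definition unitary k (W : Mat k) : Prop :=
  (forall i j, mmul (madj W) W i j = mI i j) /\ (forall i j, mmul W (madj W) i j = mI i j).

Definition mtrace k (A : Mat k) : C := Csum (fun i => A i i).
Definition tau k (A : Mat k) : C := Cmul (CofR (/ INR k)) (mtrace A).

Definition tnorm2 n k (As : 'I_n -> Mat k) : R :=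
  sqrt (Rsum (fun i => Cre (tau (mmul (madj (As i)) (As i))))).

Definition orbit_ball n k (Bs : 'I_n -> Mat k) (omega : R) (As : 'I_n -> Mat k) : Prop :=
  exists W : Mat k, unitary W /\
    tnorm2 (fun i => msub (As i) (mmul (mmul W (Bs i)) (madj W))) < omega.

Definition orbit_covers n k (Sigma : ('I_n -> Mat k) -> Prop) (omega : R) (N : nat) : Prop :=
  exists cs : seq ('I_n -> Mat k),
    size cs = N /\ (forall c, List.In c cs -> Sigma c) /\
    (forall As, Sigma As -> exists c, List.In c cs /\ orbit_ball c omega As).

Definition o2 n k (Sigma : ('I_n -> Mat k) -> Prop) (omega : R) : nat :=
  epsilon (inhabits 0%N)
    (fun N => orbit_covers Sigma omega N /\
              forall M, orbit_covers Sigma omega M -> (N <= M)%N).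

Definition logcov (o k : nat) : ER :=
  match o with
  | 0%N => ERminf
  | _ => ERfin (ln (INR o) / Rsqr (INR k))
  end.

Inductive ncpoly (V : Type) :=
| PC (a b : Q)            (* constant a + b i *)
| PV (v : V)
| PAdd (p q : ncpoly V)
| PMul (p q : ncpoly V).

Arguments PC {V}.

(* equality in the free (Q+iQ)-algebra on V *)
Inductive polyeq (V : Type) : ncpoly V -> ncpoly V -> Prop :=
| pe_refl p : polyeq p p
| pe_sym p q : polyeq p q -> polyeq q p
| pe_trans p q s : polyeq p q -> polyeq q s -> polyeq p s
| pe_add p p' q q' : polyeq p p' -> polyeq q q' -> polyeq (PAdd p q) (PAdd p' q')
| pe_mul p p' q q' : polyeq p p' -> polyeq q q' -> polyeq (PMul p q) (PMul p' q')
| pe_addA p q s : polyeq (PAdd p (PAdd q s)) (PAdd (PAdd p q) s)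
| pe_addC p q : polyeq (PAdd p q) (PAdd q p)
| pe_add0 p : polyeq (PAdd (PC 0%Q 0%Q) p) p
| pe_mulA p q s : polyeq (PMul p (PMul q s)) (PMul (PMul p q) s)
| pe_mul1l p : polyeq (PMul (PC 1%Q 0%Q) p) p
| pe_mul1r p : polyeq (PMul p (PC 1%Q 0%Q)) p
| pe_mul0 p : polyeq (PMul (PC 0%Q 0%Q) p) (PC 0%Q 0%Q)
| pe_mulDl p q s : polyeq (PMul (PAdd p q) s) (PAdd (PMul p s) (PMul q s))
| pe_mulDr p q s : polyeq (PMul p (PAdd q s)) (PAdd (PMul p q) (PMul p s))
| pe_central a b p : polyeq (PMul (PC a b) p) (PMul p (PC a b))
| pe_cadd a b c d : polyeq (PAdd (PC a b) (PC c d)) (PC (a + c)%Q (b + d)%Q)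
| pe_cmul a b c d : polyeq (PMul (PC a b) (PC c d)) (PC (a * c - b * d)%Q (a * d + b * c)%Q)
| pe_cQeq a b a' b' : Qeq a a' -> Qeq b b' -> polyeq (PC a b) (PC a' b').

(* P_1, P_2, ... enumerates all polynomials (P 0 is unused) *)
Definition enumerates_all (V : Type) (P : nat -> ncpoly V) : Prop :=
  forall q, exists r, (1 <= r)%N /\ polyeq (P r) q.

Fixpoint evalA (A : CstarAlg) (V : Type) (X : V -> A) (p : ncpoly V) : A :=
  match p with
  | PC a b => ca_smul (CofQ a b) ca_one
  | PV v => X v
  | PAdd p q => ca_add (evalA X p) (evalA X q)
  | PMul p q => ca_mul (evalA X p) (evalA X q)
  end.

Fixpoint evalM (k : nat) (V : Type) (X : V -> Mat k) (p : ncpoly V) : Mat k :=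
  match p with
  | PC a b => msmul (CofQ a b) (@mI k)
  | PV v => X v
  | PAdd p q => madd (evalM X p) (evalM X q)
  | PMul p q => mmul (evalM X p) (evalM X q)
  end.

Definition join (T : Type) n m (f : 'I_n -> T) (g : 'I_m -> T) : 'I_n + 'I_m -> T :=
  fun v => match v with inl i => f i | inr j => g j end.

Definition GammaXY (A : CstarAlg) n m (x : 'I_n -> A) (y : 'I_m -> A)
    (P : nat -> ncpoly ('I_n + 'I_m)) (Rb : R) (k : nat) (eps : R) (r : nat)
    : ('I_n -> Mat k) -> Prop :=
  fun As => (forall i, msa (As i)) /\
    exists Bs : 'I_m -> Mat k, (forall j, msa (Bs j)) /\
      (forall i, mopnorm (As i) <= Rb) /\ (forall j, mopnorm (Bs j) <= Rb) /\
      (forall j, (1 <= j <= r)%N ->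
         Rabs (mopnorm (evalM (join As Bs) (P j)) - ca_norm (evalA (join x y) (P j))) <= eps).

Arguments GammaXY {A n m} x y P Rb k eps r _.

Definition GammaX (A : CstarAlg) n (x : 'I_n -> A) (P : nat -> ncpoly 'I_n)
    (Rb : R) (k : nat) (eps : R) (r : nat) : ('I_n -> Mat k) -> Prop :=
  fun As => (forall i, msa (As i)) /\ (forall i, mopnorm (As i) <= Rb) /\
      (forall j, (1 <= j <= r)%N ->
         Rabs (mopnorm (evalM As (P j)) - ca_norm (evalA x (P j))) <= eps).

Arguments GammaX {A n} x P Rb k eps r _.

Definition KtopXY (A : CstarAlg) n m (x : 'I_n -> A) (y : 'I_m -> A)
    (P : nat -> ncpoly ('I_n + 'I_m)) (omega : R) : ER :=
  Esup (fun z => exists Rb, 0 < Rb /\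
    z = Einf (fun w => exists eps r, 0 < eps /\ (1 <= r)%N /\
          w = Elimsup (fun k => logcov (o2 (GammaXY x y P Rb k eps r) omega) k))).

Definition KtopX (A : CstarAlg) n (x : 'I_n -> A) (P : nat -> ncpoly 'I_n) (omega : R) : ER :=
  Esup (fun z => exists Rb, 0 < Rb /\
    z = Einf (fun w => exists eps r, 0 < eps /\ (1 <= r)%N /\
          w = Elimsup (fun k => logcov (o2 (GammaX x P Rb k eps r) omega) k))).

(* Both inequalities are instances of one monotonicity principle (orbit_dim_mono):
   if, at every cut-off, the microstate spaces of a first family are contained in
   microstate spaces of a second, norm-bounded family, then the orbit dimension of
   the first at 2 omega is at most that of the second at omega.  The factor 2 comes
   from recentring orbit balls at points of the smaller set (o2_subset); finiteness
   of covering numbers comes from quantizing matrix entries (finite_orbit_cover).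

   - Right inequality: forgetting the y-part of a microstate for (x : y) gives a
     microstate for x, since every polynomial in x is also a polynomial in (x, y).
   - Left inequality: a microstate X for x extends to (X, q(X)), where q_j are
     polynomials in x approximating y_j.  Such q_j exist because polynomials are
     dense in the C*-algebra generated by x (Cstar_gen_poly_approx); they are chosen
     symmetric so that q_j(X) is self-adjoint, and a Lipschitz estimate for
     polynomial evaluation controls the change from P(x, y) to P(x, q(x)). *)

From HB Require Import structures.
From Stdlib Require Import Reals QArith Qreals ClassicalEpsilon Classical Lra Lia Psatz.
From Stdlib Require Import FunctionalExtensionality.
From mathcomp Require Import ssreflect ssrfun ssrbool eqtype ssrnat seq fintype bigop finfun.

Set Implicit Arguments.
Unset Strict Implicit.
Local Open Scope R_scope.

Lemma C_ext z w : Cre z = Cre w -> Cim z = Cim w -> z = w.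
Proof. by case: z; case: w => ? ? ? ? /= -> ->. Qed.

Ltac Csolve := repeat match goal with z : C |- _ => destruct z end;
  apply: C_ext; rewrite /=; ring.

Lemma CaddA : associative Cadd. Proof. move=> *; Csolve. Qed.
Lemma CaddC : commutative Cadd. Proof. move=> *; Csolve. Qed.
Lemma Cadd0l : left_id C0 Cadd. Proof. move=> *; Csolve. Qed.
HB.instance Definition _ := Monoid.isComLaw.Build C C0 Cadd CaddA CaddC Cadd0l.

Lemma Cadd0r z : Cadd z C0 = z. Proof. Csolve. Qed.
Lemma CmulA a b c : Cmul a (Cmul b c) = Cmul (Cmul a b) c. Proof. Csolve. Qed.
Lemma CmulC a b : Cmul a b = Cmul b a. Proof. Csolve. Qed.
Lemma Cmul1l a : Cmul C1 a = a. Proof. Csolve. Qed.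
Lemma Cmul1r a : Cmul a C1 = a. Proof. Csolve. Qed.
Lemma Cmul0l a : Cmul C0 a = C0. Proof. Csolve. Qed.
Lemma Cmul0r a : Cmul a C0 = C0. Proof. Csolve. Qed.
Lemma CmulDl a b c : Cmul (Cadd a b) c = Cadd (Cmul a c) (Cmul b c). Proof. Csolve. Qed.
Lemma CmulDr a b c : Cmul a (Cadd b c) = Cadd (Cmul a b) (Cmul a c). Proof. Csolve. Qed.
Lemma CmulNl a b : Cmul (Copp a) b = Copp (Cmul a b). Proof. Csolve. Qed.
Lemma CmulNr a b : Cmul a (Copp b) = Copp (Cmul a b). Proof. Csolve. Qed.
Lemma CoppD a b : Copp (Cadd a b) = Cadd (Copp a) (Copp b). Proof. Csolve. Qed.
Lemma CconjK a : Cconj (Cconj a) = a. Proof. Csolve. Qed.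
Lemma CconjD a b : Cconj (Cadd a b) = Cadd (Cconj a) (Cconj b). Proof. Csolve. Qed.
Lemma CconjM a b : Cconj (Cmul a b) = Cmul (Cconj a) (Cconj b). Proof. Csolve. Qed.
Lemma Cconj0 : Cconj C0 = C0. Proof. Csolve. Qed.

HB.instance Definition _ := Monoid.isComLaw.Build R 0 Rplus
  (fun x y z => esym (Rplus_assoc x y z)) Rplus_comm Rplus_0_l.

Definition fsum (T : finType) (f : T -> R) : R := \big[Rplus/0]_(t : T) f t.

Lemma fsum_add (T : finType) (f g : T -> R) : fsum (fun t => f t + g t) = fsum f + fsum g.
Proof. by rewrite /fsum big_split. Qed.

Lemma fsum_scal (T : finType) c (f : T -> R) : fsum (fun t => c * f t) = c * fsum f.
Proof.
rewrite /fsum; apply: (big_rec2 (fun x y => x = c * y)); first by ring.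
by move=> i x y _ ->; ring.
Qed.

Lemma fsum_ext (T : finType) (f g : T -> R) : (forall t, f t = g t) -> fsum f = fsum g.
Proof. by move=> h; apply: eq_bigr. Qed.

Lemma fsum_le (T : finType) (f g : T -> R) : (forall t, f t <= g t) -> fsum f <= fsum g.
Proof.
move=> h; rewrite /fsum; apply: (big_rec2 (fun x y => x <= y)); first lra.
move=> i x y _ hxy; have := h i; lra.
Qed.

Lemma fsum_ge0 (T : finType) (f : T -> R) : (forall t, 0 <= f t) -> 0 <= fsum f.
Proof.
move=> h; rewrite /fsum; apply: (big_ind (fun x => 0 <= x)) => //; [lra | move=> *; lra].
Qed.

Lemma fsum_term (T : finType) (f : T -> R) t0 : (forall t, 0 <= f t) -> f t0 <= fsum f.
Proof.
move=> h; rewrite /fsum (bigD1 t0) //=.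
suff : 0 <= \big[Rplus/0]_(i | i != t0) f i by lra.
apply: (big_ind (fun x => 0 <= x)) => //; [lra | move=> *; lra].
Qed.

Lemma fsum_const (T : finType) c : fsum (fun _ : T => c) = INR #|T| * c.
Proof.
rewrite /fsum big_const; elim: #|T| => [|m IH]; first by rewrite /=; ring.
rewrite iterS IH S_INR; ring.
Qed.

Lemma fsum_pair (T1 T2 : finType) (f : T1 * T2 -> R) :
  fsum f = fsum (fun x => fsum (fun y => f (x, y))).
Proof. by rewrite /fsum pair_bigA; apply: eq_bigr => -[x y]. Qed.

Lemma fsum_exch (T1 T2 : finType) (f : T1 -> T2 -> R) :
  fsum (fun x => fsum (fun y => f x y)) = fsum (fun y => fsum (fun x => f x y)).
Proof. by rewrite /fsum exchange_big. Qed.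

Lemma quadratic_cauchy_schwarz a b c :
  (forall t, 0 <= t * t * a - 2 * t * b + c) -> 0 <= a -> b <= sqrt a * sqrt c.
Proof.
move=> h ha.
have hc : 0 <= c by have := h 0; lra.
case: (Rle_lt_dec b 0) => hb; first by have := sqrt_pos a; have := sqrt_pos c; nra.
have key : b * b <= a * c.
  case: (Req_dec a 0) => ha0.
    have h1 := h ((c + 1) / (2 * b)); rewrite ha0 in h1.
    have : 2 * ((c + 1) / (2 * b)) * b = c + 1 by field; lra.
    nra.
  have := h (b / a).
  have -> : b / a * (b / a) * a - 2 * (b / a) * b + c = (a * c - b * b) / a by field.
  move=> hq; have := Rmult_le_pos _ _ hq ha.
  have -> : (a * c - b * b) / a * a = a * c - b * b by field.
  lra.
rewrite -sqrt_mult // -(sqrt_Rsqr b); last lra.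
apply: sqrt_le_1_alt; rewrite /Rsqr; lra.
Qed.

Lemma fsum_minkowski (T : finType) (f g : T -> R) :
  sqrt (fsum (fun t => (f t + g t) * (f t + g t))) <=
  sqrt (fsum (fun t => f t * f t)) + sqrt (fsum (fun t => g t * g t)).
Proof.
set a := fsum (fun t => f t * f t); set b := fsum (fun t => f t * g t).
set c := fsum (fun t => g t * g t).
have ha : 0 <= a by apply: fsum_ge0 => t; nra.
have hc : 0 <= c by apply: fsum_ge0 => t; nra.
have hb : b <= sqrt a * sqrt c.
  apply: quadratic_cauchy_schwarz => // t.
  have -> : t * t * a - 2 * t * b + c = fsum (fun s => (t * f s - g s) * (t * f s - g s)).
    rewrite (fsum_ext (g := fun s => t * t * (f s * f s) +
                                      (-2 * t * (f s * g s) + g s * g s))); last by move=> s; ring.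
    rewrite !fsum_add !fsum_scal /a /b /c; ring.
  apply: fsum_ge0 => s; apply: Rle_0_sqr.
have -> : fsum (fun t => (f t + g t) * (f t + g t)) = a + 2 * b + c.
  rewrite (fsum_ext (g := fun s => f s * f s + (2 * (f s * g s) + g s * g s))); last by move=> s; ring.
  rewrite !fsum_add fsum_scal /a /b /c; ring.
have sa := sqrt_pos a; have sc := sqrt_pos c.
rewrite -(sqrt_Rsqr (sqrt a + sqrt c)); last lra.
apply: sqrt_le_1_alt; rewrite /Rsqr.
have e1 := sqrt_sqrt a ha; have e2 := sqrt_sqrt c hc; nra.
Qed.

Lemma Cabs_ge0 z : 0 <= Cabs z. Proof. exact: sqrt_pos. Qed.

Lemma Cabs_mul a b : Cabs (Cmul a b) = Cabs a * Cabs b.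
Proof.
rewrite /Cabs -sqrt_mult; try (rewrite /Rsqr; nra).
by congr sqrt; rewrite /Rsqr /=; ring.
Qed.

Lemma Cabs_add a b : Cabs (Cadd a b) <= Cabs a + Cabs b.
Proof.
have := fsum_minkowski (fun t : bool => if t then Cre a else Cim a)
                       (fun t : bool => if t then Cre b else Cim b).
by rewrite /fsum !big_bool /Cabs /Rsqr /=.
Qed.

Lemma Cabs_opp z : Cabs (Copp z) = Cabs z.
Proof. by rewrite /Cabs /Rsqr /=; congr sqrt; ring. Qed.

Lemma Cabs_C0 : Cabs C0 = 0.
Proof. by rewrite /Cabs /Rsqr /= Rmult_0_l Rplus_0_l sqrt_0. Qed.

Lemma Cabs_C1 : Cabs C1 = 1.
Proof. by rewrite /Cabs /Rsqr /= Rmult_0_l Rplus_0_r Rmult_1_l sqrt_1. Qed.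

Lemma Cabs_CofR r : Cabs (CofR r) = Rabs r.
Proof. by rewrite /Cabs /Rsqr /= Rmult_0_l Rplus_0_r -sqrt_Rsqr_abs. Qed.

Definition comp (z : C) (b : bool) : R := if b then Cre z else Cim z.

Lemma comp_le z b : Rabs (comp z b) <= Cabs z.
Proof.
rewrite /Cabs -sqrt_Rsqr_abs; apply: sqrt_le_1_alt; rewrite /Rsqr.
by case: b => /=; nra.
Qed.

Lemma Cabs_le_parts z : Cabs z <= Rabs (Cre z) + Rabs (Cim z).
Proof.
rewrite {1}(_ : z = Cadd (CofR (Cre z)) (mkC 0 (Cim z))); last by apply: C_ext => /=; ring.
apply: Rle_trans (Cabs_add _ _) _; rewrite Cabs_CofR.
have := sqrt_Rsqr_abs (Cim z).
by rewrite /Cabs /Rsqr /= Rmult_0_l Rplus_0_l; lra.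
Qed.

Lemma Csum_ext k (F G : 'I_k -> C) : (forall i, F i = G i) -> Csum F = Csum G.
Proof. by move=> h; apply: eq_bigr => i _. Qed.

Lemma Csum_add k (F G : 'I_k -> C) :
  Csum (fun i => Cadd (F i) (G i)) = Cadd (Csum F) (Csum G).
Proof. by rewrite /Csum big_split. Qed.

Lemma Csum_mull k a (F : 'I_k -> C) : Csum (fun i => Cmul a (F i)) = Cmul a (Csum F).
Proof.
rewrite /Csum; apply: (big_rec2 (fun x y => x = Cmul a y)); first by rewrite Cmul0r.
by move=> i x y _ ->; rewrite CmulDr.
Qed.

Lemma Csum_mulr k a (F : 'I_k -> C) : Csum (fun i => Cmul (F i) a) = Cmul (Csum F) a.
Proof. by rewrite CmulC -Csum_mull; apply: Csum_ext => i; apply: CmulC. Qed.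

Lemma Csum_conj k (F : 'I_k -> C) : Csum (fun i => Cconj (F i)) = Cconj (Csum F).
Proof. by rewrite /Csum; symmetry; apply: (big_morph Cconj CconjD Cconj0). Qed.

Lemma Csum_opp k (F : 'I_k -> C) : Csum (fun i => Copp (F i)) = Copp (Csum F).
Proof. by symmetry; apply: (big_morph Copp CoppD); Csolve. Qed.

Lemma Csum_exch k (F : 'I_k -> 'I_k -> C) :
  Csum (fun i => Csum (fun j => F i j)) = Csum (fun j => Csum (fun i => F i j)).
Proof. by rewrite /Csum exchange_big. Qed.

Lemma Csum_delta k (j : 'I_k) (F : 'I_k -> C) :
  Csum (fun i => if j == i then F i else C0) = F j.
Proof.
rewrite /Csum (bigD1 j) //= eqxx big1 ?Cadd0r // => i /negbTE.
by rewrite eq_sym => ->.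
Qed.

Lemma Csum_abs k (F : 'I_k -> C) : Cabs (Csum F) <= fsum (fun i => Cabs (F i)).
Proof.
rewrite /Csum /fsum; apply: (big_rec2 (fun x y => Cabs x <= y)); first by rewrite Cabs_C0; lra.
by move=> i y x _ h; have := Cabs_add (F i) y; lra.
Qed.

Lemma Cre_Csum k (F : 'I_k -> C) : Cre (Csum F) = fsum (fun i => Cre (F i)).
Proof. by rewrite /Csum /fsum; apply: (big_morph Cre). Qed.

Lemma mat_ext k (A B : Mat k) : (forall i j, A i j = B i j) -> A = B.
Proof. by move=> h; do 2 (apply: functional_extensionality => ?); apply: h. Qed.

Lemma maddA k (A B D : Mat k) : madd A (madd B D) = madd (madd A B) D.
Proof. by apply: mat_ext => i j; apply: CaddA. Qed.

Lemma maddC k (A B : Mat k) : madd A B = madd B A.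
Proof. by apply: mat_ext => i j; apply: CaddC. Qed.

Lemma mmulA k (A B D : Mat k) : mmul A (mmul B D) = mmul (mmul A B) D.
Proof.
apply: mat_ext => i j; rewrite /mmul.
transitivity (Csum (fun l => Csum (fun m => Cmul (Cmul (A i l) (B l m)) (D m j)))).
  by apply: Csum_ext => l; rewrite -Csum_mull; apply: Csum_ext => m; apply: CmulA.
by rewrite Csum_exch; apply: Csum_ext => m; rewrite Csum_mulr.
Qed.

Lemma mmulDl k (A B D : Mat k) : mmul (madd A B) D = madd (mmul A D) (mmul B D).
Proof.
by apply: mat_ext => i j; rewrite /mmul /madd -Csum_add; apply: Csum_ext => l; apply: CmulDl.
Qed.

Lemma mmulDr k (A B D : Mat k) : mmul A (madd B D) = madd (mmul A B) (mmul A D).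
Proof.
by apply: mat_ext => i j; rewrite /mmul /madd -Csum_add; apply: Csum_ext => l; apply: CmulDr.
Qed.

Lemma msub_mull k (A B D : Mat k) : mmul (msub A B) D = msub (mmul A D) (mmul B D).
Proof.
apply: mat_ext => i j; rewrite /mmul /msub -Csum_opp -Csum_add; apply: Csum_ext => l.
by rewrite CmulDl CmulNl.
Qed.

Lemma msub_mulr k (A B D : Mat k) : mmul D (msub A B) = msub (mmul D A) (mmul D B).
Proof.
apply: mat_ext => i j; rewrite /mmul /msub -Csum_opp -Csum_add; apply: Csum_ext => l.
by rewrite CmulDr CmulNr.
Qed.

Lemma mmul1l k (A : Mat k) : mmul (@mI k) A = A.
Proof.
apply: mat_ext => i j; rewrite /mmul /mI -(Csum_delta i (fun l => A l j)).
by apply: Csum_ext => l; case: (i == l); [apply: Cmul1l | apply: Cmul0l].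
Qed.

Lemma mmul1r k (A : Mat k) : mmul A (@mI k) = A.
Proof.
apply: mat_ext => i j; rewrite /mmul /mI -(Csum_delta j (fun l => A i l)).
by apply: Csum_ext => l; rewrite eq_sym; case: (j == l); [apply: Cmul1r | apply: Cmul0r].
Qed.

Lemma mmulZl k a (A B : Mat k) : mmul (msmul a A) B = msmul a (mmul A B).
Proof.
by apply: mat_ext => i j; rewrite /mmul /msmul -Csum_mull; apply: Csum_ext => l; rewrite CmulA.
Qed.

Lemma mmulZr k a (A B : Mat k) : mmul A (msmul a B) = msmul a (mmul A B).
Proof.
apply: mat_ext => i j; rewrite /mmul /msmul -Csum_mull; apply: Csum_ext => l.
by rewrite !CmulA (CmulC a).
Qed.

Lemma msmulA k a b (A : Mat k) : msmul a (msmul b A) = msmul (Cmul a b) A.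
Proof. by apply: mat_ext => i j; apply: CmulA. Qed.

Lemma msmulDl k a b (A : Mat k) : msmul (Cadd a b) A = madd (msmul a A) (msmul b A).
Proof. by apply: mat_ext => i j; apply: CmulDl. Qed.

Lemma msmul1 k (A : Mat k) : msmul C1 A = A.
Proof. by apply: mat_ext => i j; apply: Cmul1l. Qed.

Lemma msmul0 k (A : Mat k) : msmul C0 A = (fun _ _ => C0).
Proof. by apply: mat_ext => i j; apply: Cmul0l. Qed.

Lemma mmul_scalarl k a (A : Mat k) : mmul (msmul a (@mI k)) A = msmul a A.
Proof. by rewrite mmulZl mmul1l. Qed.

Lemma mmul_scalarr k a (A : Mat k) : mmul A (msmul a (@mI k)) = msmul a A.
Proof. by rewrite mmulZr mmul1r. Qed.

Lemma madjK k (A : Mat k) : madj (madj A) = A.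
Proof. by apply: mat_ext => i j; apply: CconjK. Qed.

Lemma madj_mul k (A B : Mat k) : madj (mmul A B) = mmul (madj B) (madj A).
Proof.
apply: mat_ext => i j; rewrite /madj /mmul -Csum_conj; apply: Csum_ext => l.
by rewrite CconjM CmulC.
Qed.

Lemma madj_add k (A B : Mat k) : madj (madd A B) = madd (madj A) (madj B).
Proof. by apply: mat_ext => i j; apply: CconjD. Qed.

Lemma madj_smul k a (A : Mat k) : madj (msmul a A) = msmul (Cconj a) (madj A).
Proof. by apply: mat_ext => i j; apply: CconjM. Qed.

Lemma madj_I k : madj (@mI k) = @mI k.
Proof. by apply: mat_ext => i j; rewrite /madj /mI (eq_sym j i); case: (i == j); Csolve. Qed.

Lemma mtrace_comm k (A B : Mat k) : mtrace (mmul A B) = mtrace (mmul B A).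
Proof.
by rewrite /mtrace /mmul Csum_exch; apply: Csum_ext => i; apply: Csum_ext => j; apply: CmulC.
Qed.

Lemma vnorm_ge0 k (v : Vec k) : 0 <= vnorm v. Proof. exact: sqrt_pos. Qed.

Lemma vnorm_entry k (u : Vec k) i : Cabs (u i) <= vnorm u.
Proof.
rewrite /vnorm -(sqrt_Rsqr (Cabs (u i))); last exact: Cabs_ge0.
apply: sqrt_le_1_alt; rewrite /Rsum -/(fsum _).
by apply: fsum_term => j; apply: Rle_0_sqr.
Qed.

Lemma vnorm_bound k (u : Vec k) M : 0 <= M -> (forall i, Cabs (u i) <= M) ->
  vnorm u <= sqrt (INR k) * M.
Proof.
move=> hM h; rewrite /vnorm -(sqrt_Rsqr M) // -sqrt_mult; [|apply: pos_INR|apply: Rle_0_sqr].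
apply: sqrt_le_1_alt; rewrite /Rsum -/(fsum _).
have -> : INR k * Rsqr M = fsum (fun _ : 'I_k => Rsqr M) by rewrite fsum_const card_ord.
by apply: fsum_le => i; rewrite /Rsqr; have := h i; have := Cabs_ge0 (u i); nra.
Qed.

(* A crude a priori bound on |A v|, which shows that the operator norm is finite. *)
Definition crude_opbound k (A : Mat k) : R :=
  sqrt (INR k) * (INR k * fsum (fun t : 'I_k * 'I_k => Cabs (A t.1 t.2))).

Lemma mapply_crude k (A : Mat k) v : vnorm (mapply A v) <= crude_opbound A * vnorm v.
Proof.
set K0 := fsum (fun t : 'I_k * 'I_k => Cabs (A t.1 t.2)).
have hK0 : 0 <= K0 by apply: fsum_ge0 => t; exact: Cabs_ge0.
have hv := vnorm_ge0 v.
rewrite /crude_opbound -/K0 Rmult_assoc; apply: vnorm_bound.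
  by apply: Rmult_le_pos => //; apply: Rmult_le_pos => //; exact: pos_INR.
move=> i; apply: Rle_trans (Csum_abs _) _.
have -> : INR k * K0 * vnorm v = fsum (fun _ : 'I_k => K0 * vnorm v)
  by rewrite fsum_const card_ord; ring.
apply: fsum_le => j; rewrite Cabs_mul; apply: Rmult_le_compat; try exact: Cabs_ge0.
  exact: (@fsum_term _ (fun t : 'I_k * 'I_k => Cabs (A t.1 t.2)) (i, j) (fun t => Cabs_ge0 _)).
exact: vnorm_entry.
Qed.

Lemma mopnorm_lub k (A : Mat k) :
  is_lub (fun r => r = 0 \/ exists v : Vec k, vnorm v = 1 /\ r = vnorm (mapply A v))
         (mopnorm A).
Proof.
rewrite /mopnorm /Rlub; apply: epsilon_spec.
have [l hl] : {m | is_lub (fun r => r = 0 \/ exists v : Vec k,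
                                     vnorm v = 1 /\ r = vnorm (mapply A v)) m}.
  apply: completeness; last by exists 0; left.
  exists (crude_opbound A) => r [->|[v [h1 ->]]].
    apply: Rmult_le_pos; first exact: sqrt_pos.
    by apply: Rmult_le_pos; [exact: pos_INR | apply: fsum_ge0 => t; exact: Cabs_ge0].
  by have := mapply_crude A v; rewrite h1 Rmult_1_r.
by exists l.
Qed.

Lemma mopnorm_unit k (A : Mat k) v : vnorm v = 1 -> vnorm (mapply A v) <= mopnorm A.
Proof. by move=> h; case: (mopnorm_lub A) => h1 _; apply: h1; right; exists v. Qed.

Lemma mopnorm_entry k (A : Mat k) i j : Cabs (A i j) <= mopnorm A.
Proof.
set e : Vec k := fun l => if j == l then C1 else C0.
have he : vnorm e = 1.
  apply: Rle_antisym; last by have := vnorm_entry e j; rewrite /e eqxx Cabs_C1.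
  rewrite -sqrt_1; apply: sqrt_le_1_alt; rewrite /Rsum -/(fsum _).
  rewrite /fsum (bigD1 j) //= big1 /e ?eqxx ?Cabs_C1 /Rsqr; first lra.
  by move=> l; rewrite eq_sym => /negbTE ->; rewrite Cabs_C0; ring.
apply: Rle_trans (mopnorm_unit A he).
have -> : A i j = mapply A e i.
  rewrite /mapply /e -(Csum_delta j (fun l => A i l)); apply: Csum_ext => l.
  by case: (j == l); rewrite ?Cmul1r ?Cmul0r.
exact: vnorm_entry.
Qed.

(** * The normalized Hilbert-Schmidt distance and orbit balls *)

Definition coord n k (X : 'I_n -> Mat k) (t : ('I_n * ('I_k * 'I_k)) * bool) : R :=
  comp (X t.1.1 t.1.2.1 t.1.2.2) t.2.

Lemma tnorm2_real n k (X : 'I_n -> Mat k) :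
  tnorm2 X = sqrt (/ INR k * fsum (fun t => coord X t * coord X t)).
Proof.
rewrite /tnorm2; congr sqrt.
rewrite /Rsum -/(fsum _) fsum_pair fsum_pair -fsum_scal; apply: fsum_ext => i.
rewrite fsum_pair /tau /= Rmult_0_l Rminus_0_r /mtrace Cre_Csum; congr Rmult.
rewrite fsum_exch; apply: fsum_ext => l; rewrite /mmul Cre_Csum; apply: fsum_ext => a.
by rewrite /fsum big_bool /coord /=; ring.
Qed.

Definition tsub n k (X Y : 'I_n -> Mat k) : 'I_n -> Mat k := fun i => msub (X i) (Y i).
Definition dist2 n k (X Y : 'I_n -> Mat k) : R := tnorm2 (tsub X Y).

Lemma coord_sub n k (X Y : 'I_n -> Mat k) t : coord (tsub X Y) t = coord X t - coord Y t.
Proof. by case: t => [[i [a l]] []]; rewrite /coord /tsub /msub /comp /=; ring. Qed.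

Lemma inv_INR_ge0 k : 0 <= / INR k.
Proof.
case: k => [|k]; first by rewrite Rinv_0; lra.
by left; apply: Rinv_0_lt_compat; apply: lt_0_INR; lia.
Qed.

Lemma dist2_tri n k (X Y Z : 'I_n -> Mat k) : dist2 X Z <= dist2 X Y + dist2 Y Z.
Proof.
rewrite /dist2 !tnorm2_real.
have hk := inv_INR_ge0 k.
have hS (U : 'I_n -> Mat k) := fsum_ge0 (fun t => Rle_0_sqr (coord U t)).
rewrite (sqrt_mult _ _ hk (hS _)) (sqrt_mult _ _ hk (hS _)) (sqrt_mult _ _ hk (hS _)).
rewrite -Rmult_plus_distr_l.
apply: Rmult_le_compat_l; first exact: sqrt_pos.
set a := coord (tsub X Y); set b := coord (tsub Y Z).
have -> : fsum (fun t => coord (tsub X Z) t * coord (tsub X Z) t) =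
          fsum (fun t => (a t + b t) * (a t + b t)).
  by apply: fsum_ext => t; rewrite /a /b !coord_sub; ring.
exact: fsum_minkowski.
Qed.

Lemma dist2_sym n k (X Y : 'I_n -> Mat k) : dist2 X Y = dist2 Y X.
Proof.
rewrite /dist2 !tnorm2_real; congr (sqrt (_ * _)); apply: fsum_ext => t.
by rewrite !coord_sub; ring.
Qed.

Lemma unitaryE k (W : Mat k) :
  unitary W -> mmul (madj W) W = @mI k /\ mmul W (madj W) = @mI k.
Proof. by case=> h1 h2; split; apply: mat_ext. Qed.

Lemma unitary_I k : unitary (@mI k).
Proof. by rewrite /unitary madj_I mmul1l. Qed.

Lemma unitary_adj k (W : Mat k) : unitary W -> unitary (madj W).
Proof. by case=> h1 h2; split; rewrite madjK. Qed.

Lemma unitary_mul k (U W : Mat k) : unitary U -> unitary W -> unitary (mmul U W).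
Proof.
move=> /unitaryE [u1 u2] /unitaryE [w1 w2]; split => i j; rewrite madj_mul.
  by rewrite mmulA -(mmulA (madj W)) u1 mmul1r w1.
by rewrite mmulA -(mmulA U) w2 mmul1r u2.
Qed.

Definition conjt n k (W : Mat k) (X : 'I_n -> Mat k) : 'I_n -> Mat k :=
  fun i => mmul (mmul W (X i)) (madj W).

Lemma conjt_comp n k (U W : Mat k) (X : 'I_n -> Mat k) :
  conjt U (conjt W X) = conjt (mmul U W) X.
Proof. by apply: functional_extensionality => i; rewrite /conjt madj_mul !mmulA. Qed.

Lemma conjt_I n k (X : 'I_n -> Mat k) : conjt (@mI k) X = X.
Proof. by apply: functional_extensionality => i; rewrite /conjt madj_I mmul1l mmul1r. Qed.

Lemma tnorm2_conj n k (W : Mat k) (X : 'I_n -> Mat k) : unitary W ->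
  tnorm2 (conjt W X) = tnorm2 X.
Proof.
move=> /unitaryE [w1 w2]; rewrite /tnorm2 /conjt; congr sqrt; rewrite /Rsum.
apply: eq_bigr => i _; congr Cre; rewrite /tau; congr Cmul.
have -> : madj (mmul (mmul W (X i)) (madj W)) = mmul (mmul W (madj (X i))) (madj W).
  by rewrite madj_mul madjK madj_mul mmulA.
have -> : mmul (mmul (mmul W (madj (X i))) (madj W)) (mmul (mmul W (X i)) (madj W))
        = mmul W (mmul (mmul (madj (X i)) (X i)) (madj W)).
  by rewrite -!mmulA; congr mmul; congr mmul; rewrite mmulA w1 mmul1l.
by rewrite mtrace_comm -mmulA w1 mmul1r.
Qed.

Lemma dist2_conj n k (W : Mat k) (X Y : 'I_n -> Mat k) : unitary W ->
  dist2 (conjt W X) (conjt W Y) = dist2 X Y.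
Proof.
move=> hW; rewrite /dist2 -(tnorm2_conj (tsub X Y) hW); congr tnorm2.
by apply: functional_extensionality => i; rewrite /tsub /conjt msub_mulr msub_mull.
Qed.

Lemma orbit_ball_recentre n k (c a b : 'I_n -> Mat k) om :
  orbit_ball c om b -> orbit_ball c om a -> orbit_ball a (2 * om) b.
Proof.
move=> [U [hU hb]] [W [hW ha]].
have {}hb : dist2 b (conjt U c) < om by [].
have {}ha : dist2 a (conjt W c) < om by [].
exists (mmul U (madj W)); split; first by apply: unitary_mul => //; exact: unitary_adj.
change (dist2 b (conjt (mmul U (madj W)) a) < 2 * om).
apply: Rle_lt_trans (dist2_tri b (conjt U c) _) _.
have -> : dist2 (conjt U c) (conjt (mmul U (madj W)) a) = dist2 a (conjt W c).
  rewrite -conjt_comp dist2_conj // -(dist2_conj _ _ hW) conjt_comp.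
  by case: (unitaryE hW) => _ ->; rewrite conjt_I dist2_sym.
lra.
Qed.

(** * Orbit covering numbers *)

Definition pick_some (T : Type) (P : T -> Prop) : option T :=
  match excluded_middle_informative (exists x, P x) with
  | left h => Some (proj1_sig (constructive_indefinite_description _ h))
  | right _ => None
  end.

Lemma pick_someP T (P : T -> Prop) x : pick_some P = Some x -> P x.
Proof.
rewrite /pick_some; case: excluded_middle_informative => // h [<-].
exact: proj2_sig.
Qed.

Lemma pick_some_ex T (P : T -> Prop) : (exists x, P x) -> exists y, pick_some P = Some y.
Proof. by rewrite /pick_some; case: excluded_middle_informative => // h _; eexists. Qed.

Lemma In_pmap (T U : Type) (f : T -> option U) s y :
  List.In y (pmap f s) <-> exists x, List.In x s /\ f x = Some y.
Proof.
elim: s => [|x s IH] /=; first by split => // -[? []].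
case e: (f x) => [z|] /=; split.
- case=> [<-|/IH [w [h1 h2]]]; [by exists x; auto | by exists w; auto].
- by case=> w [[<-|h] h2]; [left; congruence | right; apply/IH; exists w].
- by move/IH => [w [h1 h2]]; exists w; auto.
- by case=> w [[<-|h] h2]; [congruence | apply/IH; exists w].
Qed.

Lemma size_pmap_le (T U : Type) (f : T -> option U) s : (size (pmap f s) <= size s)%N.
Proof.
elim: s => [|x s IH] //=; case: (f x) => [z|] /=; first by rewrite ltnS.
exact: leqW.
Qed.

Lemma In_mem (T : eqType) (x : T) s : x \in s -> List.In x s.
Proof.
by elim: s => [|y s IH] //=; rewrite in_cons => /orP [/eqP ->|/IH]; [left|right].
Qed.

Lemma ex_minimal (P : nat -> Prop) :
  (exists N, P N) -> exists N, P N /\ forall M, P M -> (N <= M)%N.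
Proof.
move=> [N hN]; apply: NNPP => hne.
suff : forall m j, (j < m)%N -> ~ P j by move/(_ N.+1 N (ltnSn N)).
elim=> [|m IH] j //; rewrite ltnS leq_eqVlt => /orP [/eqP ->|h]; last exact: IH.
move=> hm; apply: hne; exists m; split => // M hM.
by case: (leqP m M) => // hlt; case: (IH M hlt).
Qed.

Lemma o2_spec n k (S : ('I_n -> Mat k) -> Prop) om :
  (exists N, orbit_covers S om N) ->
  orbit_covers S om (o2 S om) /\ forall M, orbit_covers S om M -> (o2 S om <= M)%N.
Proof. by move=> h; exact: (epsilon_spec (inhabits 0%N) _ (ex_minimal h)). Qed.

(* Covering numbers of a subset: a cover of S2 by omega-orbit balls yields a cover
   of S1 by (2 omega)-orbit balls centred in S1 (recentre each ball at a point of S1). *)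
Lemma o2_subset n k (S1 S2 : ('I_n -> Mat k) -> Prop) om :
  (forall X, S1 X -> S2 X) -> (exists N, orbit_covers S2 om N) ->
  (o2 S1 (2 * om) <= o2 S2 om)%N.
Proof.
move=> h12 hex; case: (o2_spec hex) => [[cs [hsz [_ hcov]]] _].
set reps := pmap (fun c => pick_some (fun a => S1 a /\ orbit_ball c om a)) cs.
have hc1 : orbit_covers S1 (2 * om) (size reps).
  exists reps; split => //; split.
    by move=> a /In_pmap [c [_ hc]]; case: (pick_someP hc).
  move=> b hb; case: (hcov b (h12 _ hb)) => c [hc hbc].
  case: (@pick_some_ex _ (fun a => S1 a /\ orbit_ball c om a)); first by exists b.
  move=> a ha; exists a; split; first by apply/In_pmap; exists c.
  by case: (pick_someP ha) => _; exact: orbit_ball_recentre.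
case: (o2_spec (ex_intro _ _ hc1)) => _ /(_ _ hc1) h.
by apply: leq_trans h _; rewrite -hsz; exact: size_pmap_le.
Qed.

Lemma Rabs_le_between r b : Rabs r <= b -> - b <= r <= b.
Proof. by move=> h; have := Rle_abs r; have := Rle_abs (- r); rewrite Rabs_Ropp; lra. Qed.

Lemma up_bounds x : x < IZR (up x) /\ IZR (up x) <= x + 1.
Proof. by case: (archimed x) => h1 h2; split; lra. Qed.

Lemma up_mono x y : x <= y -> (up x <= up y)%Z.
Proof.
move=> h; case: (up_bounds x) => a1 a2; case: (up_bounds y) => b1 b2.
have : IZR (up x) < IZR (up y) + 1 by lra.
by rewrite -plus_IZR => /lt_IZR; lia.
Qed.

Lemma up_pos x : 0 <= x -> (0 < up x)%Z.
Proof. by move=> h; case: (up_bounds x) => a1 _; apply: lt_IZR; lra. Qed.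

Lemma up_close x y : up x = up y -> Rabs (x - y) < 1.
Proof.
move=> e; case: (up_bounds x) => a1 a2; case: (up_bounds y) => b1 b2.
by rewrite e in a1 a2; apply: Rabs_def1; lra.
Qed.

(* Every set of tuples of matrices of operator norm at most Rb admits a finite
   cover by omega-orbit balls: quantize each real coordinate on a grid of mesh
   `mesh`, and keep one point of the set for each grid cell that it meets. *)
Section FiniteCover.
Variables (n k : nat) (S : ('I_n -> Mat k) -> Prop) (Rb om : R).
Hypothesis hom : 0 < om.
Hypothesis hS : forall X, S X -> forall i, mopnorm (X i) <= Rb.

Let T := (('I_n * ('I_k * 'I_k)) * bool)%type.
Let c0 := sqrt (/ INR k * INR #|{: T}|).
Let mesh := om / (c0 + 1).
Let M := Z.to_nat (up (2 * Rb / mesh)).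
Let cell (r : R) : nat := Z.to_nat (up ((r + Rb) / mesh)).

Lemma mesh_pos : 0 < mesh.
Proof.
apply: Rdiv_lt_0_compat => //.
by have := sqrt_pos (/ INR k * INR #|{: T}|); rewrite /c0; lra.
Qed.

Lemma coord_bounded X : S X -> forall t, Rabs (coord X t) <= Rb.
Proof.
move=> hX t; apply: Rle_trans (comp_le _ _) _.
by apply: Rle_trans (mopnorm_entry _ _ _) _; exact: hS.
Qed.

Lemma cell_pos r : Rabs r <= Rb -> 0 <= (r + Rb) / mesh.
Proof.
move=> /Rabs_le_between h; apply: Rmult_le_pos; first lra.
by left; apply: Rinv_0_lt_compat; exact: mesh_pos.
Qed.

Lemma cell_bound r : Rabs r <= Rb -> (cell r < M.+1)%N.
Proof.
move=> h; rewrite ltnS /cell /M; apply/leP.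
have h1 : (r + Rb) / mesh <= 2 * Rb / mesh.
  apply: Rmult_le_compat_r; first by left; apply: Rinv_0_lt_compat; exact: mesh_pos.
  by have := Rabs_le_between h; lra.
by have := up_mono h1; have := up_pos (cell_pos h); lia.
Qed.

Lemma cell_close r r' : Rabs r <= Rb -> Rabs r' <= Rb -> cell r = cell r' ->
  Rabs (r - r') < mesh.
Proof.
move=> h h' e; have hm := mesh_pos.
have e2 : up ((r + Rb) / mesh) = up ((r' + Rb) / mesh).
  by move: e; rewrite /cell; have := up_pos (cell_pos h); have := up_pos (cell_pos h'); lia.
have := up_close e2.
have -> : (r + Rb) / mesh - (r' + Rb) / mesh = (r - r') / mesh by field; lra.
rewrite /Rdiv Rabs_mult Rabs_inv (Rabs_right mesh); last lra.
move=> hh; have := Rmult_lt_compat_r mesh _ _ hm hh.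
have -> : Rabs (r - r') * / mesh * mesh = Rabs (r - r') by field; lra.
lra.
Qed.

Lemma dist2_mesh (X Y : 'I_n -> Mat k) :
  (forall t, Rabs (coord X t - coord Y t) < mesh) -> dist2 X Y < om.
Proof.
move=> h; have hm := mesh_pos; have hc : 0 <= c0 by exact: sqrt_pos.
rewrite /dist2 tnorm2_real.
apply: Rle_lt_trans (_ : c0 * mesh < om); last first.
  rewrite /mesh; apply: (Rmult_lt_reg_r (c0 + 1)); first lra.
  have -> : c0 * (om / (c0 + 1)) * (c0 + 1) = c0 * om by field; lra.
  nra.
rewrite /c0 -(sqrt_Rsqr mesh); last lra.
rewrite -sqrt_mult; [|apply: Rmult_le_pos; [exact: inv_INR_ge0|exact: pos_INR]|apply: Rle_0_sqr].
apply: sqrt_le_1_alt; rewrite Rmult_assoc; apply: Rmult_le_compat_l; first exact: inv_INR_ge0.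
rewrite -fsum_const; apply: fsum_le => t; rewrite coord_sub /Rsqr.
by have := Rabs_def2 _ _ (h t); nra.
Qed.

Definition grid_code (X : 'I_n -> Mat k) : {ffun T -> 'I_M.+1} :=
  [ffun t => inord (cell (coord X t))].

Lemma finite_orbit_cover : exists N, orbit_covers S om N.
Proof.
set reps := pmap (fun c => pick_some (fun X => S X /\ grid_code X = c))
                 (enum {: {ffun T -> 'I_M.+1}}).
exists (size reps), reps; split => //; split.
  by move=> X /In_pmap [c [_ hc]]; case: (pick_someP hc).
move=> X hX.
case: (@pick_some_ex _ (fun Y => S Y /\ grid_code Y = grid_code X)); first by exists X.
move=> Y hY; case: (pick_someP hY) => hSY hc; exists Y; split.
  apply/In_pmap; exists (grid_code X); split => //.
  by apply: In_mem; rewrite mem_enum.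
exists (@mI k); split; first exact: unitary_I.
change (dist2 X (conjt (@mI k) Y) < om); rewrite conjt_I; apply: dist2_mesh => t.
have hXt := coord_bounded hX t; have hYt := coord_bounded hSY t.
apply: cell_close => //.
have := congr1 (fun f : {ffun T -> 'I_M.+1} => nat_of_ord (f t)) hc.
by rewrite /grid_code !ffunE /= !inordK //; apply: cell_bound.
Qed.
End FiniteCover.

Lemma ERle_trans a b c : ERle a b -> ERle b c -> ERle a c.
Proof. by case: a; case: b; case: c => //= *; lra. Qed.

Definition is_Esup (E : ER -> Prop) s :=
  (forall z, E z -> ERle z s) /\ (forall s', (forall z, E z -> ERle z s') -> ERle s s').

Lemma Esup_exists (E : ER -> Prop) : exists s, is_Esup E s.
Proof.
case: (classic (E ERpinf \/ forall m, exists r, E (ERfin r) /\ m < r)) => [h|h].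
  exists ERpinf; split; first by case.
  case=> //= [m|] hs'; case: h => [hp|hu].
  - exact: hs' _ hp.
  - by case: (hu m) => r [/hs' /= hr hlt]; lra.
  - exact: hs' _ hp.
  - by case: (hu 0) => r [/hs' hr _].
have hnp : ~ E ERpinf by move=> hp; apply: h; left.
have [m hm] : exists m, forall r, E (ERfin r) -> r <= m.
  apply: NNPP => hn; apply: h; right => m; apply: NNPP => hm; apply: hn; exists m.
  by move=> r hr; apply: Rnot_lt_le => hlt; apply: hm; exists r.
case: (classic (exists r, E (ERfin r))) => [[r0 hr0]|hno].
  have [l hl] : {l | is_lub (fun r => E (ERfin r)) l}.
    by apply: completeness; [exists m | exists r0].
  exists (ERfin l); split.
    by case=> [r hr|hp|_] //=; exact: (proj1 hl) _ hr.
  case=> [m'|//|] hs' /=.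
  - by apply: (proj2 hl) => r hr; exact: hs' _ hr.
  - exact: hs' _ hr0.
exists ERminf; split => //.
by case=> [r hr|hp|//]; [case: hno; exists r | exact: hnp hp].
Qed.

Lemma Esup_ub E z : E z -> ERle z (Esup E).
Proof. exact: (proj1 (epsilon_spec _ _ (Esup_exists E))). Qed.

Lemma Esup_least E s : (forall z, E z -> ERle z s) -> ERle (Esup E) s.
Proof. exact: (proj2 (epsilon_spec _ _ (Esup_exists E))). Qed.

(* The infimum is the supremum of the lower bounds. *)
Lemma Einf_spec E :
  (forall z, E z -> ERle (Einf E) z) /\
  (forall s', (forall z, E z -> ERle s' z) -> ERle s' (Einf E)).
Proof.
have hex : exists s, (forall z, E z -> ERle s z) /\
                     (forall s', (forall z, E z -> ERle s' z) -> ERle s' s).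
  exists (Esup (fun s => forall z, E z -> ERle s z)); split.
    by move=> z hz; apply: Esup_least => s; apply.
  by move=> s' hs'; apply: Esup_ub.
exact: (epsilon_spec _ _ hex).
Qed.

Lemma Einf_lb E z : E z -> ERle (Einf E) z.
Proof. exact: (proj1 (Einf_spec E)). Qed.

Lemma Einf_great E s : (forall z, E z -> ERle s z) -> ERle s (Einf E).
Proof. exact: (proj2 (Einf_spec E)). Qed.

Lemma Elimsup_mono (u v : nat -> ER) :
  (forall k, (1 <= k)%N -> ERle (u k) (v k)) -> ERle (Elimsup u) (Elimsup v).
Proof.
move=> h; rewrite /Elimsup; apply: Einf_great => z [N ->].
apply: (@ERle_trans _ (Esup (fun w => exists k, (N.+1 <= k)%N /\ w = u k))).
  by apply: Einf_lb; exists N.+1.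
apply: Esup_least => w [k [hk ->]].
apply: ERle_trans (h k _) _; first exact: leq_trans hk.
by apply: Esup_ub; exists k; split => //; exact: ltnW.
Qed.

Lemma logcov_mono o1 o2 k : (o1 <= o2)%N -> (1 <= k)%N -> ERle (logcov o1 k) (logcov o2 k).
Proof.
case: o1 => [|o1] //; case: o2 => [|o2] // ho hk.
change (ln (INR o1.+1) / Rsqr (INR k) <= ln (INR o2.+1) / Rsqr (INR k)).
have hk' : 0 < Rsqr (INR k) by apply: Rlt_0_sqr; apply: not_0_INR; case: k hk.
apply: Rmult_le_compat_r; first by left; exact: Rinv_0_lt_compat.
have h1 : 0 < INR o1.+1 by apply: lt_0_INR; apply/ltP.
have h2 : INR o1.+1 <= INR o2.+1 by apply: le_INR; apply/leP.
by case: (Rle_lt_or_eq_dec _ _ h2) => [/(ln_increasing _ _ h1)|->]; lra.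
Qed.

(** * Orbit dimension of a family of microstate spaces *)

(* Both K_top^(2)(x; omega) and K_top^(2)(x : y; omega) are instances of the
   following quantity, attached to any family G Rb k eps r of sets of n-tuples. *)
Definition orbit_dim n (G : R -> forall k, R -> nat -> ('I_n -> Mat k) -> Prop)
    (omega : R) : ER :=
  Esup (fun z => exists Rb, 0 < Rb /\
    z = Einf (fun w => exists eps r, 0 < eps /\ (1 <= r)%N /\
          w = Elimsup (fun k => logcov (o2 (G Rb k eps r) omega) k))).

Lemma orbit_dim_mono n (G1 G2 : R -> forall k, R -> nat -> ('I_n -> Mat k) -> Prop) omega :
  0 < omega ->
  (forall Rb k eps r X, G2 Rb k eps r X -> forall i, mopnorm (X i) <= Rb) ->
  (forall Rb, 0 < Rb -> exists Rb', 0 < Rb' /\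
     forall eps r, 0 < eps -> (1 <= r)%N -> exists eps' r', 0 < eps' /\ (1 <= r')%N /\
       forall k X, G1 Rb k eps' r' X -> G2 Rb' k eps r X) ->
  ERle (orbit_dim G1 (2 * omega)) (orbit_dim G2 omega).
Proof.
move=> hom hbnd hincl; apply: Esup_least => z [Rb [hRb ->]].
have [Rb' [hRb' hincl']] := hincl Rb hRb.
apply: ERle_trans (Esup_ub (ex_intro _ Rb' (conj hRb' erefl))).
apply: Einf_great => w [eps [r [heps [hr ->]]]].
have [eps' [r' [heps' [hr' hsub]]]] := hincl' eps r heps hr.
apply: ERle_trans (Einf_lb (ex_intro _ eps' (ex_intro _ r' (conj heps' (conj hr' erefl))))) _.
apply: Elimsup_mono => k hk; apply: logcov_mono => //.
apply: o2_subset; first exact: hsub.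
by apply: (finite_orbit_cover (Rb := Rb') hom); exact: hbnd.
Qed.

Section CstarFacts.
Variable A : CstarAlg.
Implicit Types x y z u v w : A.

Definition sub x y := ca_add x (ca_opp y).

Lemma addr0 x : ca_add x ca_zero = x. Proof. by rewrite ca_addC ca_add0. Qed.
Lemma addNl x : ca_add (ca_opp x) x = ca_zero. Proof. by rewrite ca_addC ca_addN. Qed.

Lemma smul0 x : ca_smul C0 x = ca_zero.
Proof. by apply: ca_norm_eq0; rewrite ca_normZ Cabs_C0 Rmult_0_l. Qed.

Lemma norm0 : ca_norm (ca_zero : A) = 0.
Proof. by rewrite -(smul0 ca_zero) ca_normZ Cabs_C0 Rmult_0_l. Qed.

Lemma mul0r x : ca_mul ca_zero x = (ca_zero : A).
Proof. by rewrite -{1}(smul0 ca_zero) ca_smul_mull !smul0. Qed.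

Lemma oppE x : ca_opp x = ca_smul (Copp C1) x.
Proof.
have h : ca_add (ca_smul (Copp C1) x) x = ca_zero.
  rewrite -{2}(ca_smul1 x) -ca_smulDl.
  by rewrite (_ : Cadd (Copp C1) C1 = C0) ?smul0 //; apply: C_ext => /=; ring.
by rewrite -(ca_add0 (ca_opp x)) -h -ca_addA ca_addN addr0.
Qed.

Lemma norm_opp x : ca_norm (ca_opp x) = ca_norm x.
Proof. by rewrite oppE ca_normZ Cabs_opp Cabs_C1 Rmult_1_l. Qed.

Lemma norm_ge0 x : 0 <= ca_norm x.
Proof. by have := ca_normD x (ca_opp x); rewrite ca_addN norm0 norm_opp; lra. Qed.

Lemma opp_add x y : ca_opp (ca_add x y) = ca_add (ca_opp x) (ca_opp y).
Proof. by rewrite !oppE ca_smulDr. Qed.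

Lemma opp_opp x : ca_opp (ca_opp x) = x.
Proof.
rewrite !oppE ca_smulA (_ : Cmul (Copp C1) (Copp C1) = C1) ?ca_smul1 //.
by apply: C_ext => /=; ring.
Qed.

Lemma smul_opp a x : ca_smul a (ca_opp x) = ca_opp (ca_smul a x).
Proof. by rewrite !oppE !ca_smulA CmulC. Qed.

Lemma star_opp x : ca_star (ca_opp x) = ca_opp (ca_star x).
Proof. by rewrite !oppE ca_starZ; congr ca_smul; apply: C_ext => /=; ring. Qed.

Lemma star_one : ca_star (ca_one : A) = ca_one.
Proof.
have h := ca_starM (ca_star ca_one) (ca_one : A).
by rewrite ca_starK ca_mul1r ca_starK in h; rewrite -h.
Qed.

Lemma sub_tri x y z : ca_add (sub x y) (sub y z) = sub x z.
Proof. by rewrite /sub -ca_addA (ca_addA (ca_opp y)) addNl ca_add0. Qed.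

Lemma sub_addK x y : ca_add (sub x y) y = x.
Proof. by rewrite /sub -ca_addA addNl addr0. Qed.

Lemma sub_swap x y : sub y x = ca_opp (sub x y).
Proof. by rewrite /sub opp_add opp_opp ca_addC. Qed.

Lemma sub_addD x y u v : sub (ca_add x y) (ca_add u v) = ca_add (sub x u) (sub y v).
Proof.
rewrite /sub opp_add -!ca_addA; congr ca_add.
by rewrite !ca_addA (ca_addC y).
Qed.

Lemma sub_mulD x y u v :
  sub (ca_mul x y) (ca_mul u v) = ca_add (ca_mul (sub x u) y) (ca_mul u (sub y v)).
Proof.
rewrite /sub ca_mulDl ca_mulDr !oppE ca_smul_mull ca_smul_mulr -!oppE.
by rewrite -ca_addA (ca_addA (ca_opp _)) addNl ca_add0.
Qed.

Lemma sub_smul a x y : sub (ca_smul a x) (ca_smul a y) = ca_smul a (sub x y).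
Proof. by rewrite /sub ca_smulDr smul_opp. Qed.

Lemma sub_smull a c x : sub (ca_smul a x) (ca_smul c x) = ca_smul (Cadd a (Copp c)) x.
Proof.
rewrite /sub oppE ca_smulA -ca_smulDl; congr ca_smul.
by apply: C_ext => /=; ring.
Qed.

Lemma star_sub x y : ca_star (sub x y) = sub (ca_star x) (ca_star y).
Proof. by rewrite /sub ca_starD star_opp. Qed.

Lemma norm_sub_sym x y : ca_norm (sub x y) = ca_norm (sub y x).
Proof. by rewrite sub_swap norm_opp. Qed.

Lemma norm_tri x y z : ca_norm (sub x z) <= ca_norm (sub x y) + ca_norm (sub y z).
Proof. by rewrite -(sub_tri x y z); exact: ca_normD. Qed.

Lemma norm_le_sub x y : ca_norm x <= ca_norm (sub x y) + ca_norm y.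
Proof. by rewrite -{1}(sub_addK x y); exact: ca_normD. Qed.

Lemma norm_diff x y : Rabs (ca_norm x - ca_norm y) <= ca_norm (sub x y).
Proof.
have h1 := norm_le_sub x y; have h2 := norm_le_sub y x.
by rewrite norm_sub_sym in h2; apply: Rabs_le; lra.
Qed.

Lemma norm_subD x y u v :
  ca_norm (sub (ca_add x y) (ca_add u v)) <= ca_norm (sub x u) + ca_norm (sub y v).
Proof. by rewrite sub_addD; exact: ca_normD. Qed.

Lemma norm_subM x y u v :
  ca_norm (sub (ca_mul x y) (ca_mul u v)) <=
  ca_norm (sub x u) * ca_norm y + ca_norm u * ca_norm (sub y v).
Proof.
rewrite sub_mulD; apply: Rle_trans (ca_normD _ _) _.
by have := ca_normM (sub x u) y; have := ca_normM u (sub y v); lra.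
Qed.

(* The C*-identity forces the involution to be isometric. *)
Lemma norm_star x : ca_norm (ca_star x) = ca_norm x.
Proof.
have le w : ca_norm w <= ca_norm (ca_star w).
  have h := ca_cstar w; have h2 := ca_normM (ca_star w) w.
  by have := norm_ge0 w; have := norm_ge0 (ca_star w); nra.
by apply: Rle_antisym; [have := le (ca_star x); rewrite ca_starK | exact: le].
Qed.

Lemma mul_continuous u v e : 0 < e -> exists d, 0 < d /\ forall u' v',
  ca_norm (sub u u') < d -> ca_norm (sub v v') < d ->
  ca_norm (sub (ca_mul u v) (ca_mul u' v')) < e.
Proof.
move=> he; set K := ca_norm u + ca_norm v + 1.
have hu := norm_ge0 u; have hv := norm_ge0 v.
exists (Rmin 1 (e / K)); split.
  by apply: Rmin_pos; [lra | apply: Rdiv_lt_0_compat; rewrite /K; lra].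
move=> u' v' hu' hv'; have hK : 0 < K by rewrite /K; lra.
have d1 := Rmin_l 1 (e / K); have d2 := Rmin_r 1 (e / K).
set d := Rmin 1 (e / K) in hu' hv' d1 d2.
have hd : d * K <= e.
  apply: Rle_trans (Rmult_le_compat_r K _ _ (Rlt_le _ _ hK) d2) _.
  have -> : e / K * K = e by field; lra.
  lra.
rewrite norm_sub_sym in hu'; rewrite norm_sub_sym in hv'.
have hu'n : ca_norm u' <= ca_norm u + d by have := norm_le_sub u' u; lra.
apply: Rle_lt_trans (norm_subM _ _ _ _) _.
rewrite (norm_sub_sym u) (norm_sub_sym v).
have := norm_ge0 (sub u' u); have := norm_ge0 (sub v' v); have := norm_ge0 u'.
rewrite /K in hd; nra.
Qed.
End CstarFacts.

Lemma Q2R0 : Q2R 0 = 0. Proof. by rewrite /Q2R /=; field. Qed.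
Lemma Q2R1 : Q2R 1 = 1. Proof. by rewrite /Q2R /=; field. Qed.
Lemma CofQ00 : CofQ 0 0 = C0. Proof. by apply: C_ext; rewrite /= Q2R0. Qed.
Lemma CofQ10 : CofQ 1 0 = C1. Proof. by apply: C_ext; rewrite /= ?Q2R0 ?Q2R1. Qed.

Lemma CofQ_add a b c d : CofQ (a + c) (b + d) = Cadd (CofQ a b) (CofQ c d).
Proof. by apply: C_ext; rewrite /= Q2R_plus. Qed.

Lemma CofQ_mul a b c d :
  CofQ (a * c - b * d) (a * d + b * c) = Cmul (CofQ a b) (CofQ c d).
Proof. by apply: C_ext; rewrite /= ?Q2R_minus ?Q2R_plus !Q2R_mult. Qed.

Lemma CofQ_conj a b : CofQ a (- b) = Cconj (CofQ a b).
Proof. by apply: C_ext; rewrite /= ?Q2R_opp. Qed.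

Lemma CofQ_eq a b a' b' : Qeq a a' -> Qeq b b' -> CofQ a b = CofQ a' b'.
Proof. by move=> h1 h2; apply: C_ext; rewrite /=; apply: Qeq_eqR. Qed.

Fixpoint pren (V W : Type) (f : V -> W) (p : ncpoly V) : ncpoly W :=
  match p with
  | PC a b => PC a b
  | PV v => PV (f v)
  | PAdd p q => PAdd (pren f p) (pren f q)
  | PMul p q => PMul (pren f p) (pren f q)
  end.

Fixpoint pbind (V W : Type) (s : V -> ncpoly W) (p : ncpoly V) : ncpoly W :=
  match p with
  | PC a b => PC a b
  | PV v => s v
  | PAdd p q => PAdd (pbind s p) (pbind s q)
  | PMul p q => PMul (pbind s p) (pbind s q)
  end.

(* The formal adjoint, for self-adjoint indeterminates. *)
Fixpoint pstar (V : Type) (p : ncpoly V) : ncpoly V :=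
  match p with
  | PC a b => PC a (- b)%Q
  | PV v => PV v
  | PAdd p q => PAdd (pstar p) (pstar q)
  | PMul p q => PMul (pstar q) (pstar p)
  end.

Lemma evalM_ren k V W (f : V -> W) (X : W -> Mat k) p :
  evalM X (pren f p) = evalM (fun v => X (f v)) p.
Proof. by elim: p => //= p IHp q IHq; rewrite IHp IHq. Qed.

Lemma evalA_ren (A : CstarAlg) V W (f : V -> W) (X : W -> A) p :
  evalA X (pren f p) = evalA (fun v => X (f v)) p.
Proof. by elim: p => //= p IHp q IHq; rewrite IHp IHq. Qed.

Lemma evalM_bind k V W (s : V -> ncpoly W) (X : W -> Mat k) p :
  evalM X (pbind s p) = evalM (fun v => evalM X (s v)) p.
Proof. by elim: p => //= p IHp q IHq; rewrite IHp IHq. Qed.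

Lemma evalA_bind (A : CstarAlg) V W (s : V -> ncpoly W) (X : W -> A) p :
  evalA X (pbind s p) = evalA (fun v => evalA X (s v)) p.
Proof. by elim: p => //= p IHp q IHq; rewrite IHp IHq. Qed.

Lemma evalM_polyeq k V (X : V -> Mat k) p q : polyeq p q -> evalM X p = evalM X q.
Proof.
elim=> {p q} /=; try congruence.
- by move=> *; apply: maddA.
- by move=> *; apply: maddC.
- by move=> p; rewrite CofQ00 msmul0; apply: mat_ext => i j; apply: Cadd0l.
- by move=> *; apply: mmulA.
- by move=> p; rewrite CofQ10 mmul_scalarl msmul1.
- by move=> p; rewrite CofQ10 mmul_scalarr msmul1.
- by move=> p; rewrite CofQ00 mmul_scalarl !msmul0.
- by move=> *; apply: mmulDl.
- by move=> *; apply: mmulDr.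
- by move=> a b p; rewrite mmul_scalarl mmul_scalarr.
- by move=> a b c d; rewrite CofQ_add msmulDl.
- by move=> a b c d; rewrite mmul_scalarl msmulA CofQ_mul.
- by move=> a b a' b' h1 h2; rewrite (CofQ_eq h1 h2).
Qed.

Lemma evalA_polyeq (A : CstarAlg) V (X : V -> A) p q : polyeq p q -> evalA X p = evalA X q.
Proof.
elim=> {p q} /=; try congruence.
- by move=> *; apply: ca_addA.
- by move=> *; apply: ca_addC.
- by move=> p; rewrite CofQ00 smul0 ca_add0.
- by move=> *; apply: ca_mulA.
- by move=> p; rewrite CofQ10 ca_smul1 ca_mul1l.
- by move=> p; rewrite CofQ10 ca_smul1 ca_mul1r.
- by move=> p; rewrite CofQ00 smul0 mul0r.
- by move=> *; apply: ca_mulDl.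
- by move=> *; apply: ca_mulDr.
- by move=> a b p; rewrite ca_smul_mull ca_smul_mulr ca_mul1l ca_mul1r.
- by move=> a b c d; rewrite CofQ_add ca_smulDl.
- by move=> a b c d; rewrite ca_smul_mull ca_mul1l ca_smulA CofQ_mul.
- by move=> a b a' b' h1 h2; rewrite (CofQ_eq h1 h2).
Qed.

Lemma evalM_star k V (X : V -> Mat k) p : (forall v, msa (X v)) ->
  evalM X (pstar p) = madj (evalM X p).
Proof.
move=> hX; elim: p => /=.
- by move=> a b; rewrite madj_smul madj_I CofQ_conj.
- by move=> v; apply: mat_ext => i j; rewrite /madj hX.
- by move=> p IHp q IHq; rewrite madj_add IHp IHq.
- by move=> p IHp q IHq; rewrite madj_mul IHp IHq.
Qed.

Lemma evalA_star (A : CstarAlg) V (X : V -> A) p : (forall v, ca_star (X v) = X v) ->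
  evalA X (pstar p) = ca_star (evalA X p).
Proof.
move=> hX; elim: p => /=.
- by move=> a b; rewrite ca_starZ star_one CofQ_conj.
- by move=> v; rewrite hX.
- by move=> p IHp q IHq; rewrite ca_starD IHp IHq.
- by move=> p IHp q IHq; rewrite ca_starM IHp IHq.
Qed.

Lemma evalM_join_bind k n m (X : 'I_n -> Mat k) (qs : 'I_m -> ncpoly 'I_n) p :
  evalM (join X (fun j => evalM X (qs j))) p = evalM X (pbind (join (fun i => PV i) qs) p).
Proof. by rewrite evalM_bind; congr evalM; apply: functional_extensionality => -[]. Qed.

Lemma evalA_join_bind (A : CstarAlg) n m (x : 'I_n -> A) (qs : 'I_m -> ncpoly 'I_n) p :
  evalA (join x (fun j => evalA x (qs j))) p = evalA x (pbind (join (fun i => PV i) qs) p).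
Proof. by rewrite evalA_bind; congr evalA; apply: functional_extensionality => -[]. Qed.

Lemma evalA_lipschitz (A : CstarAlg) V (X : V -> A) p : exists L, 0 <= L /\
  forall Y d, 0 <= d <= 1 -> (forall v, ca_norm (sub (Y v) (X v)) <= d) ->
    ca_norm (sub (evalA Y p) (evalA X p)) <= L * d.
Proof.
elim: p => /=.
- by move=> a b; exists 0; split => [|Y d hd _]; rewrite ?/sub ?ca_addN ?norm0; lra.
- by move=> v; exists 1; split => [|Y d hd hY]; [lra | rewrite Rmult_1_l; exact: hY].
- move=> p [Lp [hLp hp]] q [Lq [hLq hq]]; exists (Lp + Lq); split; first lra.
  move=> Y d hd hY; apply: Rle_trans (norm_subD _ _ _ _) _.
  by have := hp Y d hd hY; have := hq Y d hd hY; lra.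
- move=> p [Lp [hLp hp]] q [Lq [hLq hq]].
  set np := ca_norm (evalA X p); set nq := ca_norm (evalA X q).
  have hnp : 0 <= np by exact: norm_ge0.
  have hnq : 0 <= nq by exact: norm_ge0.
  exists (Lp * (nq + Lq) + np * Lq); split; first by nra.
  move=> Y d hd hY; apply: Rle_trans (norm_subM _ _ _ _) _.
  have hpd := hp Y d hd hY; have hqd := hq Y d hd hY.
  have hqY : ca_norm (evalA Y q) <= nq + Lq.
    by have := norm_le_sub (evalA Y q) (evalA X q); rewrite -/nq; nra.
  have e1 : ca_norm (sub (evalA Y p) (evalA X p)) * ca_norm (evalA Y q) <= Lp * d * (nq + Lq).
    by apply: Rmult_le_compat => //; exact: norm_ge0.
  have e2 : np * ca_norm (sub (evalA Y q) (evalA X q)) <= np * (Lq * d).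
    exact: Rmult_le_compat_l.
  rewrite -/np; nra.
Qed.

Lemma evalA_lipschitz_family (A : CstarAlg) V (T : finType) (X : V -> A)
    (ps : T -> ncpoly V) : exists L, 0 <= L /\
  forall Y d, 0 <= d <= 1 -> (forall v, ca_norm (sub (Y v) (X v)) <= d) ->
    forall t, ca_norm (sub (evalA Y (ps t)) (evalA X (ps t))) <= L * d.
Proof.
have [Ls hLs] := ClassicalEpsilon.choice _ (fun t => evalA_lipschitz X (ps t)).
exists (fsum Ls); split; first by apply: fsum_ge0 => t; case: (hLs t).
move=> Y d hd hY t; case: (hLs t) => _ /(_ Y d hd hY) h.
apply: Rle_trans h _; apply: Rmult_le_compat_r; first lra.
by apply: fsum_term => s; case: (hLs s).
Qed.

(** * Polynomials in x are dense in the C*-algebra generated by x *)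

Lemma Q_approx r e : 0 < e -> exists t : Q, Rabs (Q2R t - r) < e.
Proof.
move=> he; have [b1 b2] := archimed (/ e).
have hN : (0 < up (/ e))%Z by apply: lt_IZR; have := Rinv_0_lt_compat _ he; lra.
set N := IZR (up (/ e)) in b1 b2.
have hN' : 0 < N by rewrite /N; apply: IZR_lt.
have [a1 a2] := archimed (r * N).
exists (Qmake (up (r * N)) (Z.to_pos (up (/ e)))).
rewrite /Q2R /= Z2Pos.id // -/N.
have -> : IZR (up (r * N)) * / N - r = (IZR (up (r * N)) - r * N) / N by field; lra.
rewrite Rabs_right; last first.
  by apply: Rle_ge; apply: Rmult_le_pos; [lra | left; apply: Rinv_0_lt_compat].
apply: (Rmult_lt_reg_r N) => //.
have -> : (IZR (up (r * N)) - r * N) / N * N = IZR (up (r * N)) - r * N by field; lra.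
have : 1 < e * N by have := Rmult_lt_compat_l e _ _ he b1; rewrite Rinv_r; lra.
lra.
Qed.

Lemma C_approx a e : 0 < e -> exists t1 t2 : Q, Cabs (Cadd a (Copp (CofQ t1 t2))) < e.
Proof.
move=> he; have he2 : 0 < e / 2 by lra.
have [t1 h1] := Q_approx (Cre a) he2; have [t2 h2] := Q_approx (Cim a) he2.
exists t1, t2; apply: Rle_lt_trans (Cabs_le_parts _) _; rewrite /=.
rewrite -(Rabs_Ropp (Cre a + - Q2R t1)) -(Rabs_Ropp (Cim a + - Q2R t2)).
have -> : - (Cre a + - Q2R t1) = Q2R t1 - Cre a by ring.
have -> : - (Cim a + - Q2R t2) = Q2R t2 - Cim a by ring.
lra.
Qed.

Section Density.
Variables (A : CstarAlg) (n : nat) (x : 'I_n -> A).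
Hypothesis hx : forall i, ca_star (x i) = x i.

Definition poly_approx (z : A) : Prop :=
  forall e, 0 < e -> exists q, ca_norm (sub z (evalA x q)) < e.

Lemma poly_approx_op2 (f : A -> A -> A) (fp : ncpoly 'I_n -> ncpoly 'I_n -> ncpoly 'I_n) :
  (forall q1 q2, evalA x (fp q1 q2) = f (evalA x q1) (evalA x q2)) ->
  (forall u v e, 0 < e -> exists d, 0 < d /\ forall u' v',
     ca_norm (sub u u') < d -> ca_norm (sub v v') < d -> ca_norm (sub (f u v) (f u' v')) < e) ->
  forall u v, poly_approx u -> poly_approx v -> poly_approx (f u v).
Proof.
move=> hfp hcont u v hu hv e he.
have [d [hd hf]] := hcont u v e he.
have [q1 h1] := hu d hd; have [q2 h2] := hv d hd.
by exists (fp q1 q2); rewrite hfp; apply: hf.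
Qed.

Lemma poly_approx_add u v : poly_approx u -> poly_approx v -> poly_approx (ca_add u v).
Proof.
apply: (poly_approx_op2 (fp := @PAdd _)) => // {}u {}v e he.
exists (e / 2); split => [|u' v' h1 h2]; first lra.
by apply: Rle_lt_trans (norm_subD _ _ _ _) _; lra.
Qed.

Lemma poly_approx_mul u v : poly_approx u -> poly_approx v -> poly_approx (ca_mul u v).
Proof. by apply: (poly_approx_op2 (fp := @PMul _)) => // {}u {}v e; apply: mul_continuous. Qed.

Lemma poly_approx_scalar a : poly_approx (ca_smul a ca_one).
Proof.
move=> e he; set K := ca_norm (ca_one : A) + 1.
have hK : 0 < K by have := norm_ge0 (ca_one : A); rewrite /K; lra.
have [t1 [t2 ht]] := C_approx a (Rdiv_lt_0_compat _ _ he hK).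
exists (PC t1 t2); rewrite /= sub_smull ca_normZ.
apply: Rle_lt_trans (_ : Cabs (Cadd a (Copp (CofQ t1 t2))) * K < e).
  by apply: Rmult_le_compat_l; [exact: Cabs_ge0 | rewrite /K; lra].
by have := Rmult_lt_compat_r K _ _ hK ht; rewrite /Rdiv Rmult_assoc Rinv_l; lra.
Qed.

Lemma poly_approx_smul a u : poly_approx u -> poly_approx (ca_smul a u).
Proof.
rewrite -{2}(ca_mul1l u) -ca_smul_mull; apply: poly_approx_mul.
exact: poly_approx_scalar.
Qed.

Lemma poly_approx_star u : poly_approx u -> poly_approx (ca_star u).
Proof.
move=> hu e he; have [q hq] := hu e he; exists (pstar q).
by rewrite evalA_star // -star_sub norm_star.
Qed.

Lemma poly_approx_closed z :
  (forall e, 0 < e -> exists w, poly_approx w /\ ca_norm (sub z w) < e) -> poly_approx z.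
Proof.
move=> hz e he; have [w [hw h1]] := hz (e / 2) ltac:(lra).
have [q h2] := hw (e / 2) ltac:(lra).
by exists q; apply: Rle_lt_trans (norm_tri _ w _) _; lra.
Qed.

Lemma poly_approx_subalg : unital_cstar_subalg poly_approx.
Proof.
split; first by move=> e he; exists (PC 1 0); rewrite /= CofQ10 ca_smul1 /sub ca_addN norm0.
split; first exact: poly_approx_add.
split; first exact: poly_approx_smul.
split; first exact: poly_approx_mul.
split; first exact: poly_approx_star.
exact: poly_approx_closed.
Qed.

Lemma Cstar_gen_poly_approx z : in_Cstar_gen x z -> poly_approx z.
Proof.
move=> h; apply: h; first exact: poly_approx_subalg.
by move=> i e he; exists (PV i); rewrite /= /sub ca_addN norm0.
Qed.
End Density.

Definition psym (V : Type) (q : ncpoly V) : ncpoly V :=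
  PMul (PC (1 # 2) 0) (PAdd q (pstar q)).

Lemma half_C : CofQ (1 # 2) 0 = CofR (/ 2).
Proof. by apply: C_ext; rewrite /= ?Q2R0 /Q2R /=; field. Qed.

Lemma psym_msa k V (As : V -> Mat k) q : (forall v, msa (As v)) -> msa (evalM As (psym q)).
Proof.
move=> hsa; suff h : madj (evalM As (psym q)) = evalM As (psym q) by move=> i j; rewrite -{1}h.
rewrite /psym /= evalM_star // mmul_scalarl madj_smul madj_add madjK half_C.
have -> : Cconj (CofR (/ 2)) = CofR (/ 2) by apply: C_ext => /=; ring.
by rewrite maddC.
Qed.

Lemma psym_approx (A : CstarAlg) n (x : 'I_n -> A) (hx : forall i, ca_star (x i) = x i)
  (y : A) (hy : ca_star y = y) q d :
  ca_norm (sub y (evalA x q)) < d -> ca_norm (sub y (evalA x (psym q))) < d.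
Proof.
move=> h.
have ey : y = ca_smul (CofR (/ 2)) (ca_add y (ca_star y)).
  rewrite hy ca_smulDr -ca_smulDl (_ : Cadd (CofR (/ 2)) (CofR (/ 2)) = C1) ?ca_smul1 //.
  by apply: C_ext => /=; field.
rewrite /psym /= ca_smul_mull ca_mul1l evalA_star // half_C {1}ey sub_smul ca_normZ.
rewrite Cabs_CofR Rabs_right; last lra.
have := norm_subD y (ca_star y) (evalA x q) (ca_star (evalA x q)).
by rewrite -star_sub norm_star; lra.
Qed.

Definition defect k (A : CstarAlg) V (Xm : V -> Mat k) (Xa : V -> A) (q : ncpoly V) : R :=
  Rabs (mopnorm (evalM Xm q) - ca_norm (evalA Xa q)).

Lemma defect_perturb k (A : CstarAlg) V (Xm : V -> Mat k) (Xa Ya : V -> A) q :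
  defect Xm Xa q <= defect Xm Ya q + ca_norm (sub (evalA Ya q) (evalA Xa q)).
Proof.
have := norm_diff (evalA Ya q) (evalA Xa q).
have := Rabs_triang (mopnorm (evalM Xm q) - ca_norm (evalA Ya q))
                    (ca_norm (evalA Ya q) - ca_norm (evalA Xa q)).
by rewrite /defect (_ : forall a b c, a - b + (b - c) = a - c) //; [lra | move=> *; ring].
Qed.

Lemma fin_bound (T : finType) (P : T -> nat -> Prop) :
  (forall t, exists m, P t m) -> exists N, forall t, exists m, (m <= N)%N /\ P t m.
Proof.
move=> /ClassicalEpsilon.choice [f hf]; exists (\max_(t : T) f t) => t.
by exists (f t); split; [exact: (@leq_bigmax _ (fun t => f t) t) | exact: hf].
Qed.

Lemma enum_controls V (P : nat -> ncpoly V) (T : finType) (f : T -> ncpoly V) :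
  enumerates_all P -> exists r', (1 <= r')%N /\
  forall k (A : CstarAlg) (Xm : V -> Mat k) (Xa : V -> A) eps,
    (forall j, (1 <= j <= r')%N -> defect Xm Xa (P j) <= eps) ->
    forall t, defect Xm Xa (f t) <= eps.
Proof.
move=> hP; have [N hN] := fin_bound (fun t => hP (f t)).
exists (maxn N 1); split; first exact: leq_maxr.
move=> k A Xm Xa eps hdef t; have [m [hmN [hm1 heq]]] := hN t.
rewrite /defect -(evalM_polyeq _ heq) -(evalA_polyeq _ heq).
by apply: hdef; rewrite hm1 (leq_trans hmN) ?leq_maxl.
Qed.

(** * Comparing the microstate spaces *)

Section Microstates.
Variables (A : CstarAlg) (n p : nat) (x : 'I_n -> A) (y : 'I_p -> A)
    (PX : nat -> ncpoly 'I_n) (PXY : nat -> ncpoly ('I_n + 'I_p)%type).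

(* Forgetting the y-part of a microstate for (x : y) gives a microstate for x:
   the constraints on P_1, ..., P_r in x alone are among the constraints on the
   first r' polynomials in (x, y). *)
Lemma GammaXY_in_GammaX : enumerates_all PXY -> forall r, exists r', (1 <= r')%N /\
  forall Rb k eps X, GammaXY x y PXY Rb k eps r' X -> GammaX x PX Rb k eps r X.
Proof.
move=> hXY r.
have [r' [hr' hctl]] := enum_controls (fun j : 'I_r.+1 => pren inl (PX j)) hXY.
exists r'; split => // Rb k eps X [hsa [Bs [_ [hX [_ hdef]]]]].
split => //; split => // j /andP [hj1 hjr].
have := hctl _ _ (join X Bs) (join x y) eps hdef (inord j).
by rewrite /defect evalM_ren evalA_ren inordK.
Qed.

Hypothesis hx : forall i, ca_star (x i) = x i.
Hypothesis hy : forall j, ca_star (y j) = y j.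
Hypothesis hgen : forall j, in_Cstar_gen x (y j).

Let yq (qs : 'I_p -> ncpoly 'I_n) : 'I_p -> A := fun j => evalA x (qs j).

Lemma sa_poly_substitutes eps r : 0 < eps -> exists qs : 'I_p -> ncpoly 'I_n,
  (forall k (Xm : 'I_n -> Mat k), (forall i, msa (Xm i)) -> forall j, msa (evalM Xm (qs j))) /\
  (forall j, ca_norm (sub (y j) (yq qs j)) < 1) /\
  (forall j : 'I_r.+1,
     ca_norm (sub (evalA (join x (yq qs)) (PXY j)) (evalA (join x y) (PXY j))) <= eps).
Proof.
move=> heps.
have [L [hL hlip]] := evalA_lipschitz_family (join x y) (fun j : 'I_r.+1 => PXY j).
set d := Rmin 1 (eps / (L + 1)).
have hd : 0 < d by apply: Rmin_pos; [lra | apply: Rdiv_lt_0_compat; lra].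
have hd1 : d <= 1 by exact: Rmin_l.
have hLd : L * d <= eps.
  apply: Rle_trans (Rmult_le_compat_l _ _ _ hL (Rmin_r _ _)) _.
  have -> : L * (eps / (L + 1)) = eps - eps / (L + 1) by field; lra.
  have : 0 < eps / (L + 1) by apply: Rdiv_lt_0_compat; lra.
  lra.
have [qs hqs] := ClassicalEpsilon.choice _ (fun j => Cstar_gen_poly_approx hx (hgen j) hd).
have hqs' j : ca_norm (sub (y j) (yq (fun j => psym (qs j)) j)) < d.
  exact: psym_approx.
exists (fun j => psym (qs j)); split; first by move=> k Xm hXm j; exact: psym_msa.
split; first by move=> j; have := hqs' j; lra.
move=> j; apply: Rle_trans (hlip _ d (conj (Rlt_le _ _ hd) hd1) _ j) hLd.
case=> [i|i] /=; first by rewrite /sub ca_addN norm0; lra.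
by rewrite norm_sub_sym; have := hqs' i; lra.
Qed.

(* Conversely a microstate X for x extends to the microstate (X, q(X)) for (x : y),
   q as above: the defect of P_j at (X, q(X)) relative to (x, y) is at most the
   defect of P_j o (id, q) at X relative to x, plus |P_j(x, q(x)) - P_j(x, y)|. *)
Lemma GammaX_in_GammaXY : enumerates_all PX ->
  forall Rb, 0 < Rb -> exists Rb', 0 < Rb' /\
  forall eps r, 0 < eps -> (1 <= r)%N -> exists eps' r', 0 < eps' /\ (1 <= r')%N /\
    forall k X, GammaX x PX Rb k eps' r' X -> GammaXY x y PXY Rb' k eps r X.
Proof.
move=> hX Rb hRb; set Sy := fsum (fun j => ca_norm (y j)).
have hyS j : ca_norm (y j) <= Sy.
  by apply: (@fsum_term _ (fun j => ca_norm (y j))) => ?; exact: norm_ge0.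
have hSy : 0 <= Sy by apply: fsum_ge0 => j; exact: norm_ge0.
exists (Rb + Sy + 2); split => [|eps r heps hr]; first lra.
have [qs [hqsa [hq1 hqP]]] := sa_poly_substitutes r (ltac:(lra) : 0 < eps / 2).
have [r' [hr' hctl]] := enum_controls (fun t : 'I_p + 'I_r.+1 =>
  match t with inl j => qs j | inr j => pbind (join (fun i => PV i) qs) (PXY j) end) hX.
exists (Rmin (eps / 2) 1), r'; split; first by apply: Rmin_pos; lra.
split => // k X [hsa [hXb /(hctl _ _ X x) {}hctl]].
have heps' := Rmin_l (eps / 2) 1; have heps1 := Rmin_r (eps / 2) 1.
split => //; exists (fun j => evalM X (qs j)); split; first exact: hqsa.
split; first by move=> i; have := hXb i; lra.
split.
  move=> j; have := hctl (inl j); rewrite /defect => /Rabs_le_between.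
  have := norm_le_sub (yq qs j) (y j); rewrite norm_sub_sym.
  by have := hq1 j; have := hyS j; rewrite /yq; lra.
move=> j /andP [hj1 hjr]; have hj : (j < r.+1)%N by rewrite ltnS.
apply: Rle_trans (defect_perturb _ _ (join x (yq qs)) _) _.
have -> : defect (join X (fun j => evalM X (qs j))) (join x (yq qs)) (PXY j) =
          defect X x (pbind (join (fun i => PV i) qs) (PXY j)).
  by rewrite /defect evalM_join_bind evalA_join_bind.
have := hctl (inr (inord j)); have := hqP (inord j); rewrite /= inordK //.
lra.
Qed.
End Microstates.

Unset Implicit Arguments.
Theorem lemma3p2 (A : CstarAlg) (n p : nat) (x : 'I_n -> A) (y : 'I_p -> A)
    (PX : nat -> ncpoly 'I_n) (PXY : nat -> ncpoly ('I_n + 'I_p)%type) :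
  (forall i, ca_star (x i) = x i) ->
  (forall j, ca_star (y j) = y j) ->
  (forall j, in_Cstar_gen x (y j)) ->
  enumerates_all PX -> enumerates_all PXY ->
  forall omega : R, 0 < omega ->
    ERle (KtopX x PX (4 * omega)) (KtopXY x y PXY (2 * omega)) /\
    ERle (KtopXY x y PXY (2 * omega)) (KtopX x PX omega).
Proof.
move=> hx hy hgen hPX hPXY omega hom.
change (ERle (orbit_dim (GammaX x PX) (4 * omega)) (orbit_dim (GammaXY x y PXY) (2 * omega)) /\
        ERle (orbit_dim (GammaXY x y PXY) (2 * omega)) (orbit_dim (GammaX x PX) omega)).
split.
- (* K(x; 4 omega) <= K(x : y; 2 omega): microstates for x extend to (x : y). *)
  rewrite (_ : 4 * omega = 2 * (2 * omega)); last ring.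
  apply: orbit_dim_mono; first lra.
    by move=> Rb k eps r X [_ [Bs [_ [hb _]]]].
  exact: GammaX_in_GammaXY hx hy hgen hPX.
- (* K(x : y; 2 omega) <= K(x; omega): microstates for (x : y) restrict to x. *)
  apply: orbit_dim_mono => //; first by move=> Rb k eps r X [_ [hb _]].
  move=> Rb hRb; exists Rb; split => // eps r heps hr.
  have [r' [hr' hsub]] := GammaXY_in_GammaX x y PX hPXY r.
  by exists eps, r'; do 2 split => //; move=> k X; exact: hsub.
Qed.
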